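(* Let $D\subset\mathbb{R}^2$ be a bounded domain invariant under rotation by $2\pi/N$ about the origin, for some even $N\ge4$. Let $T_\pm$ be invertible linear maps of $\mathbb{R}^2$ agreeing on the $x_1$-axis, with $T_\pm(\mathbb{R}^2_\pm)=\mathbb{R}^2_\pm$ and $\det T_+=\det T_-$, and let $T=T_+$ on $\{x_2\ge0\}$, $T=T_-$ on $\{x_2\le0\}$. Then \[ \frac14\big(\|T_+^{-1}\|_{HS}^2+\|T_-^{-1}\|_{HS}^2\big)=\frac{I_0(TD)}{A(TD)^3}\Big/\frac{I_0(D)}{A(D)^3}. \]
   Context: $\mathbb{R}^2_\pm=\{\pm x_2>0\}$. $A$ is area and $I_0(E)=\int_E|x|^2dx$ the moment of inertia about the origin. $\|M\|_{HS}=(\operatorname{tr}MM^\dagger)^{1/2}$. *)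

From Stdlib Require Import Reals Lra ClassicalEpsilon.
Open Scope R_scope.

Definition pt2 := (R * R)%type.
Definition region := pt2 -> Prop.

Definition nrm2 (p : pt2) : R := fst p ^ 2 + snd p ^ 2.

Definition is_open2 (E : region) : Prop :=
  forall p, E p -> exists eps, 0 < eps /\
    forall q, (fst q - fst p) ^ 2 + (snd q - snd p) ^ 2 < eps ^ 2 -> E q.

Definition is_connected2 (E : region) : Prop :=
  ~ exists U V : region, is_open2 U /\ is_open2 V /\
      (exists p, E p /\ U p) /\ (exists p, E p /\ V p) /\
      (forall p, E p -> U p \/ V p) /\
      (forall p, E p -> U p -> V p -> False).

Definition is_domain (E : region) : Prop :=
  (exists p, E p) /\ is_open2 E /\ is_connected2 E.

Definition is_bounded2 (E : region) : Prop :=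
  exists M, forall p, E p -> Rabs (fst p) <= M /\ Rabs (snd p) <= M.

Definition is_glb (S : R -> Prop) (m : R) : Prop :=
  (forall s, S s -> m <= s) /\ (forall m', (forall s, S s -> m' <= s) -> m' <= m).

Definition Rinf (S : R -> Prop) : R := epsilon (inhabits 0) (is_glb S).

Definition box2 := ((R * R) * (R * R))%type.
Definition in_box2 (c : box2) (p : pt2) : Prop :=
  fst (fst c) < fst p < snd (fst c) /\ fst (snd c) < snd p < snd (snd c).
Definition vol_box2 (c : box2) : R :=
  Rmax 0 (snd (fst c) - fst (fst c)) * Rmax 0 (snd (snd c) - fst (snd c)).

Definition cover_sums2 (E : region) (s : R) : Prop :=
  exists c : nat -> box2,
    (forall p, E p -> exists n, in_box2 (c n) p) /\
    infinite_sum (fun n => vol_box2 (c n)) s.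

Definition area (E : region) : R := Rinf (cover_sums2 E).

Definition pt3 := (R * R * R)%type.
Definition box3 := ((R * R) * (R * R) * (R * R))%type.
Definition in_box3 (c : box3) (p : pt3) : Prop :=
  let '(i1, i2, i3) := c in let '(x, y, z) := p in
  fst i1 < x < snd i1 /\ fst i2 < y < snd i2 /\ fst i3 < z < snd i3.
Definition vol_box3 (c : box3) : R :=
  let '(i1, i2, i3) := c in
  Rmax 0 (snd i1 - fst i1) * Rmax 0 (snd i2 - fst i2) * Rmax 0 (snd i3 - fst i3).

Definition cover_sums3 (F : pt3 -> Prop) (s : R) : Prop :=
  exists c : nat -> box3,
    (forall p, F p -> exists n, in_box3 (c n) p) /\
    infinite_sum (fun n => vol_box3 (c n)) s.

Definition volume3 (F : pt3 -> Prop) : R := Rinf (cover_sums3 F).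

Definition subgraph_nrm2 (E : region) (p : pt3) : Prop :=
  let '(x, y, t) := p in E (x, y) /\ 0 < t < nrm2 (x, y).

(* moment of inertia I_0(E) = \int_E |x|^2 dx
   (integral of a nonnegative function = measure of its subgraph) *)
Definition moment0 (E : region) : R := volume3 (subgraph_nrm2 E).

Definition mat2 := (R * R * R * R)%type.
Definition mapply (M : mat2) (p : pt2) : pt2 :=
  let '(a, b, c, d) := M in (a * fst p + b * snd p, c * fst p + d * snd p).
Definition mdet (M : mat2) : R := let '(a, b, c, d) := M in a * d - b * c.
Definition minv (M : mat2) : mat2 :=
  let '(a, b, c, d) := M in
  (d / mdet M, - b / mdet M, - c / mdet M, a / mdet M).
Definition hs2 (M : mat2) : R :=
  let '(a, b, c, d) := M in a ^ 2 + b ^ 2 + c ^ 2 + d ^ 2.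

Definition rot (th : R) (p : pt2) : pt2 :=
  (cos th * fst p - sin th * snd p, sin th * fst p + cos th * snd p).

(* piecewise map: T+ on x2 >= 0, T- on x2 < 0 (they agree on x2 = 0) *)
Definition pw_map (Tp Tm : mat2) (p : pt2) : pt2 :=
  if Rle_dec 0 (snd p) then mapply Tp p else mapply Tm p.

Definition image (f : pt2 -> pt2) (E : region) : region :=
  fun q => exists p, E p /\ f p = q.

From Stdlib Require Import Reals Lra Lia List ClassicalEpsilon Classical FunctionalExtensionality PropExtensionality.
Open Scope R_scope.

(* The hypotheses on [T+] and [T-] force [T+ = [[a, b1], [0, d]]] and
   [T- = [[a, b2], [0, d]]] with [d > 0], so [T] is the scaling [diag(a, d)] after the
   horizontal shear [x1 |-> x1 + beta(x2) / a], where [beta] is piecewise linear.  Shears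
   preserve area and volume, hence [A(TD) = |ad| A(D)] and [I_0(TD) = |ad| \int_D |Tx|^2].
   As [N] is even, [D] is symmetric under [x |-> -x], which pairs the two halves of [T]:
   [2 \int_D |Tx|^2 = \int_D q] for the quadratic form [q x = |T+ x|^2 + |T- x|^2].
   Averaging over the [N >= 3] rotations preserving [D] replaces [q] by [(tr q / 2) |x|^2],
   and [tr q / (ad)^2 = |T+^-1|_HS^2 + |T-^-1|_HS^2].
   Area, volume and [I_0] are outer measures given by countable box covers ([I_0] being the
   volume of the subgraph of [|x|^2]); the measure-theoretic inputs are their invariance
   under Lipschitz shears and the additivity of volumes of Lipschitz subgraphs, which
   follows from additivity on separated sets. *)

(** * Finite sums and series *)

Fixpoint sumN (f : nat -> R) (n : nat) : R :=
  match n with O => 0 | S n' => sumN f n' + f n' end.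

Lemma sum_f_R0_sumN f n : sum_f_R0 f n = sumN f (S n).
Proof. induction n; simpl in *; [lra|]. rewrite IHn. simpl. lra. Qed.

Lemma sumN_ge0 f n : (forall k, 0 <= f k) -> 0 <= sumN f n.
Proof. intros H; induction n; simpl; [lra|]. specialize (H n); lra. Qed.

Lemma sumN_mono f n m : (forall k, 0 <= f k) -> (n <= m)%nat -> sumN f n <= sumN f m.
Proof. intros H Hnm; induction Hnm; simpl; [lra|]. specialize (H m); lra. Qed.

Lemma sumN_le f g n : (forall k, (k < n)%nat -> f k <= g k) -> sumN f n <= sumN g n.
Proof. induction n; intros H; simpl; [lra|].
  assert (f n <= g n) by (apply H; lia). assert (sumN f n <= sumN g n) by (apply IHn; intros; apply H; lia). lra. Qed.

Lemma sumN_ext f g n : (forall k, (k < n)%nat -> f k = g k) -> sumN f n = sumN g n.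
Proof. induction n; intros H; simpl; [lra|].
  rewrite (H n) by lia. rewrite IHn; [lra|]. intros; apply H; lia. Qed.

Lemma sumN_plus f g n : sumN (fun k => f k + g k) n = sumN f n + sumN g n.
Proof. induction n; simpl; lra. Qed.

Lemma sumN_scal f c n : sumN (fun k => c * f k) n = c * sumN f n.
Proof. induction n; simpl; [lra|]. rewrite IHn; lra. Qed.

Lemma sumN_const c n : sumN (fun _ => c) n = INR n * c.
Proof. induction n; simpl; [ring|]. rewrite IHn. destruct n; simpl; ring. Qed.

Lemma sumN_add f a b : sumN f (a + b) = sumN f a + sumN (fun r => f (a + r)%nat) b.
Proof. induction b; simpl. - rewrite Nat.add_0_r; lra. - rewrite Nat.add_succ_r; simpl. rewrite IHb; lra. Qed.

Lemma sumN_shift f n : sumN f (S n) = f O + sumN (fun k => f (S k)) n.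
Proof. induction n; simpl in *; [lra|]. rewrite IHn. lra. Qed.

Lemma sumN_telescope (h : nat -> R) n : sumN (fun k => h (S k) - h k) n = h n - h O.
Proof. induction n; simpl; [lra|]. rewrite IHn. lra. Qed.

Lemma sumN_geom eps n : sumN (fun i => eps / 2 ^ (S i)) n = eps - eps / 2 ^ n.
Proof. induction n; cbn [sumN]. - simpl; field. - rewrite IHn. simpl. field. apply pow_nonzero; lra. Qed.

Lemma geom_term_pos eps i : 0 < eps -> 0 < eps / 2 ^ i.
Proof. intros; apply Rdiv_lt_0_compat; auto. apply pow_lt; lra. Qed.

Lemma sumN_geom_le eps n : 0 <= eps -> sumN (fun i => eps / 2 ^ (S i)) n <= eps.
Proof. intros; rewrite sumN_geom. assert (0 <= eps / 2 ^ n).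
  { apply Rmult_le_pos; auto. left; apply Rinv_0_lt_compat, pow_lt; lra. } lra. Qed.

Lemma infinite_sum_ge_sumN f l n : (forall k, 0 <= f k) -> infinite_sum f l -> sumN f n <= l.
Proof.
  intros Hf Hl. destruct (Rle_dec (sumN f n) l) as [|H]; auto. exfalso.
  destruct (Hl (sumN f n - l)) as [N HN]; [lra|].
  specialize (HN (max N n) (Nat.le_max_l _ _)). rewrite sum_f_R0_sumN in HN.
  assert (sumN f n <= sumN f (S (max N n))) by (apply sumN_mono; auto; lia).
  unfold Rdist in HN. apply Rabs_def2 in HN. lra.
Qed.

Lemma infinite_sum_le_of_sumN f l M : infinite_sum f l -> (forall n, sumN f n <= M) -> l <= M.
Proof.
  intros Hl HM. destruct (Rle_dec l M) as [|H]; auto. exfalso.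
  destruct (Hl (l - M)) as [N HN]; [lra|]. specialize (HN N (le_n _)).
  rewrite sum_f_R0_sumN in HN. specialize (HM (S N)). unfold Rdist in HN. apply Rabs_def2 in HN. lra.
Qed.

Lemma infinite_sum_of_bounded f M : (forall k, 0 <= f k) -> (forall n, sumN f n <= M) ->
  exists l, infinite_sum f l /\ l <= M.
Proof.
  intros Hf HM.
  destruct (growing_cv (sum_f_R0 f)) as [l Hl].
  - intro n. simpl. specialize (Hf (S n)). lra.
  - exists M. intros x [n ->]. rewrite sum_f_R0_sumN. apply HM.
  - exists l. assert (infinite_sum f l) by exact Hl. split; auto.
    apply (infinite_sum_le_of_sumN f); auto.
Qed.

Lemma infinite_sum_ext f g l : (forall n, f n = g n) -> infinite_sum f l -> infinite_sum g l.
Proof. intros H; rewrite (functional_extensionality f g H); auto. Qed.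

Lemma infinite_sum_scal_r f l c : infinite_sum f l -> infinite_sum (fun n => f n * c) (l * c).
Proof.
  intros H eps He. destruct (Req_dec c 0) as [->|Hc].
  - exists O. intros n _. rewrite sum_f_R0_sumN, (sumN_ext _ (fun _ => 0)), sumN_const by (intros; ring).
    unfold Rdist. rewrite !Rmult_0_r, Rminus_0_r, Rabs_R0. lra.
  - destruct (H (eps / Rabs c)) as [N HN]. apply Rdiv_lt_0_compat; auto. apply Rabs_pos_lt; auto.
    exists N. intros n Hn. specialize (HN n Hn). rewrite sum_f_R0_sumN in *. unfold Rdist in *.
    rewrite (sumN_ext _ (fun k => c * f k)) by (intros; ring). rewrite sumN_scal.
    replace (c * sumN f (S n) - l * c) with (c * (sumN f (S n) - l)) by ring.
    rewrite Rabs_mult. apply Rmult_lt_reg_r with (/ Rabs c). apply Rinv_0_lt_compat, Rabs_pos_lt; auto.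
    replace (Rabs c * Rabs (sumN f (S n) - l) * / Rabs c) with (Rabs (sumN f (S n) - l)) by (field; apply Rabs_no_R0; auto).
    auto.
Qed.

Lemma infinite_sum_plus f g a b : infinite_sum f a -> infinite_sum g b ->
  infinite_sum (fun n => f n + g n) (a + b).
Proof.
  intros Ha Hb eps He. destruct (Ha (eps/2)) as [N1 H1]; [lra|]. destruct (Hb (eps/2)) as [N2 H2]; [lra|].
  exists (max N1 N2). intros n Hn. specialize (H1 n ltac:(lia)). specialize (H2 n ltac:(lia)).
  rewrite sum_f_R0_sumN in *. rewrite sumN_plus. unfold Rdist in *.
  apply Rabs_def2 in H1; apply Rabs_def2 in H2. apply Rabs_def1; lra.
Qed.

(* Cantor's enumeration of [nat * nat] along anti-diagonals; diagonal [s] starts at index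
   [triangle s]. *)
Definition diag_next (p : nat * nat) : nat * nat :=
  let (i, j) := p in match j with O => (O, S i) | S j' => (S i, j') end.

Fixpoint diag_enum (k : nat) : nat * nat :=
  match k with O => (O, O) | S k' => diag_next (diag_enum k') end.

Fixpoint triangle (s : nat) : nat := match s with O => O | S s' => (triangle s' + S s')%nat end.

Lemma diag_enum_triangle s : forall r, (r <= s)%nat -> diag_enum (triangle s + r) = (r, s - r)%nat.
Proof.
  induction s.
  - intros r Hr. assert (r = 0%nat) by lia. subst. reflexivity.
  - assert (H0 : diag_enum (triangle (S s)) = (0, S s)%nat).
    { change (triangle (S s)) with (triangle s + S s)%nat. rewrite Nat.add_succ_r.
      change (diag_enum (S (triangle s + s))) with (diag_next (diag_enum (triangle s + s))).
      rewrite (IHs s (le_n _)). rewrite Nat.sub_diag. reflexivity. }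
    induction r; intros Hr.
    + rewrite Nat.add_0_r. rewrite H0. f_equal.
    + rewrite Nat.add_succ_r.
      change (diag_enum (S (triangle (S s) + r))) with (diag_next (diag_enum (triangle (S s) + r))).
      rewrite IHr by lia. unfold diag_next.
      destruct (S s - r)%nat eqn:E; [lia|]. f_equal; lia.
Qed.

Lemma diag_enum_surj i j : diag_enum (triangle (i + j) + i) = (i, j).
Proof. rewrite diag_enum_triangle by lia. f_equal; lia. Qed.

Lemma triangle_ge s : (s <= triangle s)%nat.
Proof. induction s; simpl; lia. Qed.

Lemma sumN_diag_enum (F : nat -> nat -> R) n :
  sumN (fun k => F (fst (diag_enum k)) (snd (diag_enum k))) (triangle n) =
  sumN (fun i => sumN (fun j => F i j) (n - i)) n.
Proof.
  induction n as [|n IH]; [reflexivity|].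
  change (triangle (S n)) with (triangle n + S n)%nat. rewrite sumN_add, IH.
  rewrite (sumN_ext (fun r => F (fst (diag_enum (triangle n + r))) (snd (diag_enum (triangle n + r))))
             (fun r => F r (n - r)%nat)).
  2:{ intros k Hk. rewrite diag_enum_triangle by lia. reflexivity. }
  cbn [sumN]. replace (n - n)%nat with O by lia. replace (S n - n)%nat with 1%nat by lia. cbn [sumN].
  rewrite (sumN_ext (fun i => sumN (fun j => F i j) (S n - i)) (fun i => sumN (fun j => F i j) (n - i) + F i (n - i)%nat)).
  2:{ intros k Hk. replace (S n - k)%nat with (S (n - k)) by lia. reflexivity. }
  rewrite sumN_plus. lra.
Qed.

Definition lsum {A} (f : A -> R) (l : list A) : R := fold_right (fun x acc => f x + acc) 0 l.

Lemma lsum_ge0 {A} (f : A -> R) l : (forall x, 0 <= f x) -> 0 <= lsum f l.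
Proof. intros H; induction l; simpl; [lra|]. specialize (H a); lra. Qed.

Lemma lsum_cons {A} (f : A -> R) x l : lsum f (x :: l) = f x + lsum f l.
Proof. reflexivity. Qed.

Lemma lsum_app {A} (f : A -> R) l1 l2 : lsum f (l1 ++ l2) = lsum f l1 + lsum f l2.
Proof. induction l1; simpl; lra. Qed.

Lemma lsum_le {A} (f g : A -> R) l : (forall x, In x l -> f x <= g x) -> lsum f l <= lsum g l.
Proof. induction l; intros H; simpl; [lra|]. pose proof (H a (or_introl eq_refl)).
  assert (lsum f l <= lsum g l) by (apply IHl; intros; apply H; right; auto). lra. Qed.

Lemma lsum_plus {A} (f g : A -> R) l : lsum (fun x => f x + g x) l = lsum f l + lsum g l.
Proof. induction l; simpl; [lra|]. rewrite IHl; lra. Qed.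

Lemma lsum_comm {A B} (f : A -> B -> R) l1 l2 :
  lsum (fun x => lsum (f x) l2) l1 = lsum (fun y => lsum (fun x => f x y) l1) l2.
Proof.
  induction l1 as [|x l1 IH]; simpl.
  - induction l2; simpl; lra.
  - rewrite IH, <- lsum_plus. reflexivity.
Qed.

Lemma lsum_map {A B} (f : B -> R) (g : A -> B) l : lsum f (map g l) = lsum (fun x => f (g x)) l.
Proof. induction l; simpl; auto. rewrite IHl; auto. Qed.

Lemma lsum_flat_map {A B} (f : B -> R) (g : A -> list B) l :
  lsum f (flat_map g l) = lsum (fun x => lsum f (g x)) l.
Proof. induction l; simpl; auto. rewrite lsum_app, IHl; auto. Qed.

Lemma lsum_const {A} (f : A -> R) l c : (forall x, In x l -> f x = c) -> lsum f l = INR (length l) * c.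
Proof. induction l; intros H; [simpl; lra|].
  change (lsum f (a::l)) with (f a + lsum f l). change (length (a::l)) with (S (length l)).
  rewrite H by (left; auto). rewrite IHl by (intros; apply H; right; auto).
  rewrite S_INR. lra. Qed.

Lemma lsum_map_seq {A} (f : A -> R) (c : nat -> A) N : lsum f (map c (seq 0 N)) = sumN (fun k => f (c k)) N.
Proof. induction N; auto. rewrite seq_S, map_app, lsum_app, IHN. simpl. lra. Qed.

Lemma lsum_filter_disjoint_le {A} (f : A -> R) (p q : A -> bool) l : (forall x, 0 <= f x) ->
  (forall x, In x l -> p x = true -> q x = true -> False) ->
  lsum f (filter p l) + lsum f (filter q l) <= lsum f l.
Proof.
  intros Hf; induction l as [|x l IH]; intros Hd; simpl; [lra|].
  assert (IH' := IH (fun y Hy => Hd y (or_intror Hy))). specialize (Hf x).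
  destruct (p x) eqn:Ep, (q x) eqn:Eq; simpl.
  - exfalso; apply (Hd x); simpl; auto.
  - lra. - lra.
  - lra.
Qed.

Lemma Rabs_le_between x y : Rabs x <= y -> - y <= x <= y.
Proof. unfold Rabs; destruct (Rcase_abs x); intros; lra. Qed.

Lemma Rabs_lt_between x y : Rabs x < y -> - y < x < y.
Proof. unfold Rabs; destruct (Rcase_abs x); intros; lra. Qed.

Lemma Rabs_lt_of_between x y : - y < x < y -> Rabs x < y.
Proof. unfold Rabs; destruct (Rcase_abs x); intros; lra. Qed.

Lemma Rmax_0_ge0 x : 0 <= x -> Rmax 0 x = x.
Proof. intros; apply Rmax_right; auto. Qed.

Lemma mul_div_succ_le c e : 0 <= c -> 0 <= e -> c * (e / (c + 1)) <= e.
Proof.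
  intros Hc He. replace (c * (e / (c + 1))) with (e * (c / (c + 1))) by (field; lra).
  assert (c / (c + 1) <= 1) by (apply Rmult_le_reg_r with (c + 1); [lra|]; unfold Rdiv; rewrite Rmult_assoc, Rinv_l; lra).
  nra.
Qed.

Lemma exists_nat_div_lt X Y : 0 < Y -> exists k, (1 <= k)%nat /\ X / INR k < Y.
Proof.
  intros HY. destruct (INR_unbounded (Rabs X / Y)) as [n Hn]. exists (S n). split; [lia|].
  assert (H0 : 0 < INR (S n)) by (apply lt_0_INR; lia). rewrite S_INR in *.
  apply Rle_lt_trans with (Rabs X / (INR n + 1)).
  - unfold Rdiv. apply Rmult_le_compat_r; [left; apply Rinv_0_lt_compat; lra| apply Rle_abs].
  - apply Rmult_lt_reg_r with (INR n + 1); [lra|]. unfold Rdiv. rewrite Rmult_assoc, Rinv_l by lra.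
    apply Rmult_lt_reg_r with (/ Y); [apply Rinv_0_lt_compat; lra|].
    rewrite Rmult_1_r. rewrite (Rmult_comm Y), Rmult_assoc, Rinv_r by lra. unfold Rdiv in Hn. lra.
Qed.

Lemma exists_small_ratio V e : 0 <= V -> 0 < e -> exists g, 0 < g <= 1 /\ 3 * g * V <= e.
Proof.
  intros HV He. exists (Rmin 1 (e / (3 * V + 1))).
  assert (0 < e / (3 * V + 1)) by (apply Rdiv_lt_0_compat; lra).
  split; [split; [apply Rmin_glb_lt; lra| apply Rmin_l]|].
  apply Rle_trans with (3 * (e / (3 * V + 1)) * V).
  - apply Rmult_le_compat_r; auto. apply Rmult_le_compat_l; [lra|apply Rmin_r].
  - replace (3 * (e / (3 * V + 1)) * V) with (e * (3 * V / (3 * V + 1))) by (field; lra).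
    assert (3 * V / (3 * V + 1) <= 1).
    { apply Rmult_le_reg_r with (3 * V + 1); [lra|]. unfold Rdiv. rewrite Rmult_assoc, Rinv_l; lra. }
    nra.
Qed.

Lemma inv_succ_small d : 0 < d -> exists N, forall N', (N <= N')%nat -> / (INR N' + 1) < d.
Proof.
  intros Hd. destruct (exists_nat_div_lt 1 d Hd) as [k [Hk Hk2]]. exists k. intros N' HN'.
  assert (INR k <= INR N') by (apply le_INR; auto). assert (0 < INR k) by (apply lt_0_INR; lia).
  apply Rle_lt_trans with (1 / INR k); auto. unfold Rdiv. rewrite Rmult_1_l.
  apply Rinv_le_contravar; lra.
Qed.

Lemma inv_succ_le N N' : (N <= N')%nat -> / (INR N' + 1) <= / (INR N + 1).
Proof. intros H. apply Rinv_le_contravar. pose proof (pos_INR N); lra. apply le_INR in H; lra. Qed.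

Lemma open_interval_nbhd x a b : a < x < b -> exists d, 0 < d /\ forall y, Rabs (y - x) < d -> a < y < b.
Proof. intros H. exists (Rmin (x - a) (b - x)). split; [apply Rmin_glb_lt; lra|].
  intros y Hy. apply Rabs_lt_between in Hy. pose proof (Rmin_l (x - a) (b - x)). pose proof (Rmin_r (x - a) (b - x)). lra. Qed.

(* Compactness of [a, b] in gauge form, by the least-upper-bound argument. *)
Lemma interval_gauge_uniform a b (Pn : R -> nat -> Prop) :
  (forall y N N', (N <= N')%nat -> Pn y N -> Pn y N') ->
  (forall x, a <= x <= b -> exists d N, 0 < d /\ forall y, Rabs (y - x) < d -> Pn y N) ->
  exists N, forall y, a <= y <= b -> Pn y N.
Proof.
  intros Hmono Hg. destruct (Rle_dec a b) as [Hab|Hab]; [|exists O; intros; lra].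
  set (S := fun z => a <= z <= b /\ exists N, forall y, a <= y <= z -> Pn y N).
  assert (Sa : S a).
  { split; [lra|]. destruct (Hg a ltac:(lra)) as [d [N [Hd HN]]]. exists N. intros y Hy.
    apply HN. replace (y - a) with 0 by lra. rewrite Rabs_R0; lra. }
  destruct (completeness S) as [s [Hub Hlub]].
  - exists b. intros z [Hz _]. lra.
  - exists a; auto.
  - assert (Has : a <= s) by (apply Hub; auto).
    assert (Hsb : s <= b) by (apply Hlub; intros z [Hz _]; lra).
    destruct (Hg s ltac:(lra)) as [d0 [N0 [Hd0 HN0]]].
    assert (Hz : exists z, S z /\ s - d0 < z).
    { apply NNPP; intros Hn. assert (is_upper_bound S (s - d0)).
      { intros z Sz. apply Rnot_lt_le. intros Hlt. apply Hn. exists z; auto. }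
      specialize (Hlub _ H). lra. }
    destruct Hz as [z [[Hz1 [N1 HN1]] Hz2]].
    set (w := Rmin b (s + d0 / 2)).
    assert (Sw : S w).
    { split; [split; [unfold w; apply Rmin_glb; lra| unfold w; apply Rmin_l]|].
      exists (max N0 N1). intros y Hy. destruct (Rle_dec y z).
      - apply (Hmono y N1); [lia|]. apply HN1; lra.
      - apply (Hmono y N0); [lia|]. apply HN0. apply Rabs_lt_of_between.
        assert (w <= s + d0 / 2) by (unfold w; apply Rmin_r). lra. }
    assert (w <= s) by (apply Hub; auto).
    assert (w = b).
    { unfold w in *. unfold Rmin in *. destruct (Rle_dec b (s + d0 / 2)); lra. }
    destruct Sw as [_ [N HN]]. exists N. intros y Hy. apply HN. lra.
Qed.

Lemma pred_ext {T} (E F : T -> Prop) : (forall p, E p <-> F p) -> E = F.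
Proof. intros H. apply functional_extensionality; intros p. apply propositional_extensionality; auto. Qed.

Definition img {T} (F : T -> T) (Y : T -> Prop) : T -> Prop := fun q => exists p, Y p /\ F p = q.

Lemma img_cancel {T} (F G : T -> T) Y : (forall p, G (F p) = p) -> img G (img F Y) = Y.
Proof. intros H. apply pred_ext. intros q. split.
  - intros [p' [[p [Yp <-]] <-]]. rewrite H; auto.
  - intros Yq. exists (F q). split; [exists q; auto|apply H]. Qed.

Lemma img_comp {T} (F G : T -> T) Y : img G (img F Y) = img (fun p => G (F p)) Y.
Proof. apply pred_ext. intros q. split.
  - intros [p' [[p [Yp <-]] <-]]. exists p; auto.
  - intros [p [Yp <-]]. exists (F p). split; auto. exists p; auto. Qed.

Lemma img_ext {T} (F G : T -> T) Y : (forall p, Y p -> F p = G p) -> img F Y = img G Y.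
Proof. intros H. apply pred_ext. intros q. split; intros [p [Yp <-]]; exists p; split; auto. rewrite H; auto. Qed.

(** * Outer measure generated by countable box covers *)

(* [area] and [volume3] are both instances of [omeas]. Since [Rinf] of an empty
   set is an unspecified real, statements about [omeas E] carry [coverable E]. *)
Section OuterMeasure.
Context {P Bx : Type} (inb : Bx -> P -> Prop) (vol : Bx -> R).
Hypothesis vol_ge0 : forall b, 0 <= vol b.
Context (e0 : Bx).
Hypothesis e0_vol : vol e0 = 0.

Definition cover_sum (E : P -> Prop) (s : R) : Prop :=
  exists c : nat -> Bx, (forall p, E p -> exists n, inb (c n) p) /\
    infinite_sum (fun n => vol (c n)) s.
Definition omeas E := Rinf (cover_sum E).
Definition coverable E := exists s, cover_sum E s.

Lemma cover_sum_ge0 E s : cover_sum E s -> 0 <= s.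
Proof. intros [c [_ Hc]]. apply (infinite_sum_ge_sumN _ _ O) in Hc; simpl in Hc; auto. Qed.

Lemma omeas_glb E : coverable E -> is_glb (cover_sum E) (omeas E).
Proof.
  intros [s0 Hs0]. unfold omeas, Rinf. apply epsilon_spec.
  set (S' := fun x => cover_sum E (-x)).
  destruct (completeness S') as [m [Hub Hlub]].
  - exists 0. intros x Hx. apply cover_sum_ge0 in Hx. lra.
  - exists (-s0). unfold S'. rewrite Ropp_involutive. auto.
  - exists (-m). split.
    + intros s Hs. assert (S' (-s)) as H by (unfold S'; rewrite Ropp_involutive; auto).
      specialize (Hub _ H). lra.
    + intros m' Hm'. assert (is_upper_bound S' (-m')) as H.
      { intros x Hx. specialize (Hm' _ Hx). lra. }
      specialize (Hlub _ H). lra.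
Qed.

Lemma omeas_le_cover_sum E s : cover_sum E s -> omeas E <= s.
Proof. intros H. apply (proj1 (omeas_glb E (ex_intro _ s H))); auto. Qed.

Lemma omeas_ge E m : coverable E -> (forall s, cover_sum E s -> m <= s) -> m <= omeas E.
Proof. intros H Hm. apply (proj2 (omeas_glb E H)); auto. Qed.

Lemma omeas_ge0 E : coverable E -> 0 <= omeas E.
Proof. intros H. apply omeas_ge; auto. apply cover_sum_ge0. Qed.

Lemma omeas_approx E eps : coverable E -> 0 < eps -> exists s, cover_sum E s /\ s < omeas E + eps.
Proof.
  intros H He. apply NNPP; intros Hn.
  assert (omeas E + eps <= omeas E); [|lra].
  apply omeas_ge; auto. intros s Hs. apply Rnot_lt_le. intros Hl; apply Hn; eauto.
Qed.

Lemma omeas_cover_le E c M : (forall p, E p -> exists n, inb (c n) p) ->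
  (forall n, sumN (fun k => vol (c k)) n <= M) -> coverable E /\ omeas E <= M.
Proof.
  intros Hc HM. destruct (infinite_sum_of_bounded (fun k => vol (c k)) M) as [l [Hl HlM]]; auto.
  assert (cover_sum E l) by (exists c; auto). split; [exists l; auto|].
  apply omeas_le_cover_sum in H; lra.
Qed.

Lemma omeas_mono E F : (forall p, E p -> F p) -> coverable F -> coverable E /\ omeas E <= omeas F.
Proof.
  intros HEF HF. assert (Hc : forall s, cover_sum F s -> cover_sum E s).
  { intros s [c [Hc Hs]]. exists c; split; auto. }
  destruct HF as [s Hs]. assert (coverable E) by (exists s; auto). split; auto.
  apply omeas_ge; [exists s; auto|]. intros s' Hs'. apply omeas_le_cover_sum; auto.
Qed.

Lemma omeas_ext E F : (forall p, E p <-> F p) -> omeas E = omeas F.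
Proof. intros H; rewrite (pred_ext E F H); auto. Qed.


Lemma omeas_countable_subadd (E : P -> Prop) (Es : nat -> P -> Prop) M :
  (forall n, coverable (Es n)) -> (forall p, E p -> exists n, Es n p) ->
  (forall n, sumN (fun k => omeas (Es k)) n <= M) -> coverable E /\ omeas E <= M.
Proof.
  intros Hf Hcov HM.
  assert (main : forall eps, 0 < eps -> coverable E /\ omeas E <= M + eps).
  { intros eps He.
    assert (H : forall n, exists cs0 : (nat -> Bx) * R,
      (forall p, Es n p -> exists m, inb (fst cs0 m) p) /\
      infinite_sum (fun m => vol (fst cs0 m)) (snd cs0) /\ snd cs0 < omeas (Es n) + eps / 2 ^ (S n)).
    { intros n. destruct (omeas_approx (Es n) (eps / 2 ^ (S n))) as [s [[c [H1 H2]] H3]]; auto.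
      apply geom_term_pos; auto. exists (c, s); simpl; auto. }
    set (pick := fun n => proj1_sig (constructive_indefinite_description _ (H n))).
    assert (Hp : forall n, (forall p, Es n p -> exists m, inb (fst (pick n) m) p) /\
      infinite_sum (fun m => vol (fst (pick n) m)) (snd (pick n)) /\ snd (pick n) < omeas (Es n) + eps / 2 ^ (S n)).
    { intros n. unfold pick. apply (proj2_sig (constructive_indefinite_description _ (H n))). }
    set (d := fun k => fst (pick (fst (diag_enum k))) (snd (diag_enum k))).
    apply (omeas_cover_le E d).
    - intros p Ep. destruct (Hcov p Ep) as [n Hn]. destruct (proj1 (Hp n) p Hn) as [m Hm].
      exists (triangle (n + m) + n)%nat. unfold d. rewrite diag_enum_surj. simpl. auto.
    - intros K. apply Rle_trans with (sumN (fun k => vol (d k)) (triangle K)).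
      { apply sumN_mono; auto. apply triangle_ge. }
      unfold d. rewrite (sumN_diag_enum (fun i j => vol (fst (pick i) j))).
      apply Rle_trans with (sumN (fun i => omeas (Es i) + eps / 2 ^ (S i)) K).
      + apply sumN_le. intros i Hi. destruct (Hp i) as [_ [Hs Hlt]].
        apply (infinite_sum_ge_sumN _ _ (K - i)) in Hs; auto. lra.
      + rewrite sumN_plus. specialize (HM K). assert (sumN (fun i => eps / 2 ^ S i) K <= eps) by (apply sumN_geom_le; lra). lra. }
  split; [apply (main 1); lra|]. apply le_epsilon. intros eps He. apply main; auto.
Qed.

Lemma omeas_empty : coverable (fun _ => False) /\ omeas (fun _ => False) <= 0.
Proof. apply (omeas_cover_le _ (fun _ => e0)). - intros p []. - intros n. induction n; simpl; lra. Qed.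

Lemma omeas_union_le E A B : coverable A -> coverable B -> (forall p, E p -> A p \/ B p) -> coverable E /\ omeas E <= omeas A + omeas B.
Proof.
  intros HA HB HE. set (Es := fun n => match n with O => A | 1%nat => B | _ => fun _ => False end).
  apply (omeas_countable_subadd E Es).
  - intros [|[|n]]; simpl; auto. apply omeas_empty.
  - intros p Ep. destruct (HE p Ep); [exists O|exists 1%nat]; simpl; auto.
  - assert (forall n, (2 <= n)%nat -> omeas (Es n) = 0).
    { intros [|[|n]] Hn; try lia. simpl. pose proof omeas_empty as [H1 H2]. pose proof (omeas_ge0 _ H1). lra. }
    assert (HA0 := omeas_ge0 _ HA). assert (HB0 := omeas_ge0 _ HB).
    assert (forall n, sumN (fun k => omeas (Es k)) (S (S n)) = omeas A + omeas B).
    { induction n. - simpl. lra. - change (sumN (fun k => omeas (Es k)) (S (S (S n)))) with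
        (sumN (fun k => omeas (Es k)) (S (S n)) + omeas (Es (S (S n)))). rewrite IHn, H by lia. lra. }
    intros [|[|n]]; [simpl; lra|simpl; lra|]. rewrite H0; lra.
Qed.

Lemma omeas_list_cover_le E l : (forall p, E p -> exists b, In b l /\ inb b p) -> coverable E /\ omeas E <= lsum vol l.
Proof.
  intros H. apply (omeas_cover_le E (fun n => nth n l e0)).
  - intros p Ep. destruct (H p Ep) as [b [Hb Hp]]. destruct (In_nth l b e0 Hb) as [n [_ Hn]].
    exists n; rewrite Hn; auto.
  - clear H. induction l as [|x l IH]; intros n.
    + induction n; cbn [sumN]; [simpl; lra|]. replace (nth n nil e0) with e0 by (destruct n; reflexivity). rewrite e0_vol; lra.
    + destruct n; [simpl; apply Rplus_le_le_0_compat; [apply vol_ge0|apply lsum_ge0; auto]|].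
      rewrite sumN_shift. simpl. specialize (IH n). lra.
Qed.

Lemma omeas_box_le E b : (forall p, E p -> inb b p) -> coverable E /\ omeas E <= vol b.
Proof. intros H. destruct (omeas_list_cover_le E (b :: nil)) as [H1 H2].
  - intros p Hp; exists b; simpl; auto.
  - simpl in H2. split; auto; lra. Qed.

Lemma omeas_image_le F Y c : 0 <= c ->
  (forall b eps, 0 < eps -> exists l, (forall p, inb b p -> Y p -> exists b', In b' l /\ inb b' (F p)) /\
     lsum vol l <= c * vol b + eps) ->
  coverable Y -> coverable (img F Y) /\ omeas (img F Y) <= c * omeas Y.
Proof.
  intros Hc0 Hb HY.
  assert (main : forall eps, 0 < eps -> coverable (img F Y) /\ omeas (img F Y) <= c * omeas Y + (c + 1) * eps).
  { intros eps He. destruct (omeas_approx Y eps HY He) as [s [[cv [Hcv Hs]] Hslt]].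
    set (Es := fun n q => exists p, inb (cv n) p /\ Y p /\ F p = q).
    assert (HEs : forall n, coverable (Es n) /\ omeas (Es n) <= c * vol (cv n) + eps / 2 ^ (S n)).
    { intros n. destruct (Hb (cv n) (eps / 2 ^ (S n))) as [l [Hl1 Hl2]]. apply geom_term_pos; auto.
      destruct (omeas_list_cover_le (Es n) l) as [H1 H2].
      - intros q [p [Hp1 [Hp2 <-]]]. auto.
      - split; auto; lra. }
    apply (omeas_countable_subadd _ Es).
    - intros n; apply HEs.
    - intros q [p [Yp <-]]. destruct (Hcv p Yp) as [n Hn]. exists n. exists p; auto.
    - intros n. apply Rle_trans with (sumN (fun k => c * vol (cv k) + eps / 2 ^ (S k)) n).
      + apply sumN_le. intros k _. apply HEs.
      + rewrite sumN_plus, sumN_scal. pose proof (infinite_sum_ge_sumN _ _ n (fun k => vol_ge0 (cv k)) Hs).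
        pose proof (sumN_geom_le eps n ltac:(lra)).
        assert (c * sumN (fun k => vol (cv k)) n <= c * (omeas Y + eps)) by (apply Rmult_le_compat_l; lra).
        lra. }
  split; [apply (main 1); lra|]. apply le_epsilon. intros eps He.
  destruct (main (eps / (c + 1))) as [_ H]. apply Rdiv_lt_0_compat; lra.
  replace ((c + 1) * (eps / (c + 1))) with eps in H by (field; lra). lra.
Qed.

Definition fine_refinement (close : P -> P -> Prop) : Prop :=
  forall b eps, 0 < eps -> exists l, (forall p, inb b p -> exists b', In b' l /\ inb b' p) /\
    lsum vol l <= vol b + eps /\ (forall b', In b' l -> forall p q, inb b' p -> inb b' q -> close p q).

Lemma omeas_separated_box_le A B close b eps : fine_refinement close ->
  (forall p q, A p -> B q -> ~ close p q) -> 0 < eps ->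
  coverable (fun p => A p /\ inb b p) /\ coverable (fun p => B p /\ inb b p) /\
  omeas (fun p => A p /\ inb b p) + omeas (fun p => B p /\ inb b p) <= vol b + eps.
Proof.
  intros Href Hsep He. destruct (Href b eps He) as [l [Hl1 [Hl2 Hl3]]].
  set (touches := fun (X : P -> Prop) b' =>
    if excluded_middle_informative (exists p, inb b' p /\ X p) then true else false).
  assert (Hcov : forall X, (forall p, X p -> inb b p -> exists b', In b' (filter (touches X) l) /\ inb b' p)).
  { intros X p Xp Hp. destruct (Hl1 p Hp) as [b' [Hb' Hpb']]. exists b'; split; auto.
    apply filter_In; split; auto. unfold touches. destruct (excluded_middle_informative _) as [_|Hn]; auto.
    exfalso; apply Hn; eauto. }
  destruct (omeas_list_cover_le (fun p => A p /\ inb b p) (filter (touches A) l)) as [HA1 HA2].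
  { intros p [Ap Hp]. apply Hcov; auto. }
  destruct (omeas_list_cover_le (fun p => B p /\ inb b p) (filter (touches B) l)) as [HB1 HB2].
  { intros p [Bp Hp]. apply Hcov; auto. }
  assert (lsum vol (filter (touches A) l) + lsum vol (filter (touches B) l) <= lsum vol l).
  { apply lsum_filter_disjoint_le; auto. intros x Hx HmA HmB. unfold touches in HmA, HmB.
    destruct (excluded_middle_informative (exists p, inb x p /\ A p)) as [[p [Hp Ap]]|]; [|discriminate].
    destruct (excluded_middle_informative (exists p, inb x p /\ B p)) as [[q [Hq Bq]]|]; [|discriminate].
    apply (Hsep p q Ap Bq). apply (Hl3 x Hx p q Hp Hq). }
  split; auto; split; auto; lra.
Qed.

Lemma omeas_separated_ge A B close : fine_refinement close ->
  (forall p q, A p -> B q -> ~ close p q) ->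
  coverable (fun p => A p \/ B p) ->
  coverable A /\ coverable B /\ omeas A + omeas B <= omeas (fun p => A p \/ B p).
Proof.
  intros Href Hsep HU.
  assert (HA : coverable A) by (apply (omeas_mono A (fun p => A p \/ B p)); auto).
  assert (HB : coverable B) by (apply (omeas_mono B (fun p => A p \/ B p)); auto).
  split; auto; split; auto.
  apply le_epsilon. intros eps2 He2. set (eps := eps2 / 2). assert (He : 0 < eps) by (unfold eps; lra).
  destruct (omeas_approx _ eps HU He) as [s [[c [Hc Hs]] Hslt]].
  set (EA := fun n p => A p /\ inb (c n) p). set (EB := fun n p => B p /\ inb (c n) p).
  assert (Hn : forall n, coverable (EA n) /\ coverable (EB n) /\ omeas (EA n) + omeas (EB n) <= vol (c n) + eps / 2 ^ (S n)).
  { intros n. apply (omeas_separated_box_le A B close); auto. apply geom_term_pos; lra. }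
  assert (Hsum : forall n, sumN (fun k => omeas (EA k)) n + sumN (fun k => omeas (EB k)) n <= s + eps).
  { intros n. rewrite <- sumN_plus. apply Rle_trans with (sumN (fun k => vol (c k) + eps / 2 ^ (S k)) n).
    - apply sumN_le; intros k _; apply Hn.
    - rewrite sumN_plus. pose proof (infinite_sum_ge_sumN _ _ n (fun k => vol_ge0 (c k)) Hs).
      pose proof (sumN_geom_le eps n ltac:(lra)). lra. }
  assert (HA0 : forall k, 0 <= omeas (EA k)) by (intros k; apply omeas_ge0, Hn).
  assert (HB0 : forall k, 0 <= omeas (EB k)) by (intros k; apply omeas_ge0, Hn).
  destruct (infinite_sum_of_bounded (fun k => omeas (EA k)) (s + eps)) as [al [Hal _]]; auto.
  { intros n. specialize (Hsum n). pose proof (sumN_ge0 _ n HB0). lra. }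
  destruct (infinite_sum_of_bounded (fun k => omeas (EB k)) (s + eps)) as [bl [Hbl _]]; auto.
  { intros n. specialize (Hsum n). pose proof (sumN_ge0 _ n HA0). lra. }
  assert (al + bl <= s + eps).
  { apply (infinite_sum_le_of_sumN _ _ _ (infinite_sum_plus _ _ _ _ Hal Hbl)).
    intros n. rewrite sumN_plus. auto. }
  assert (omeas A <= al).
  { apply (omeas_countable_subadd A EA al); [intros n; apply Hn| |].
    - intros p Ap. destruct (Hc p (or_introl Ap)) as [n Hn']. exists n; split; auto.
    - intros n; apply infinite_sum_ge_sumN; auto. }
  assert (omeas B <= bl).
  { apply (omeas_countable_subadd B EB bl); [intros n; apply Hn| |].
    - intros p Bp. destruct (Hc p (or_intror Bp)) as [n Hn']. exists n; split; auto.
    - intros n; apply infinite_sum_ge_sumN; auto. }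
  unfold eps in *. lra.
Qed.

Lemma omeas_image_boxwise_le F (beta : Bx -> Bx) c Y : 0 <= c ->
  (forall b p, inb b p -> inb (beta b) (F p)) -> (forall b, vol (beta b) <= c * vol b) ->
  coverable Y -> coverable (img F Y) /\ omeas (img F Y) <= c * omeas Y.
Proof.
  intros Hc Hin Hv HY. apply omeas_image_le; auto.
  intros b eps He. exists (beta b :: nil). split.
  - intros p Hp _. exists (beta b); simpl; auto.
  - simpl. specialize (Hv b). lra.
Qed.

Lemma omeas_image_eq F G c c' Y : 0 < c -> c * c' = 1 -> coverable Y ->
  (forall Z, coverable Z -> coverable (img F Z) /\ omeas (img F Z) <= c * omeas Z) ->
  (forall Z, coverable Z -> coverable (img G Z) /\ omeas (img G Z) <= c' * omeas Z) ->
  (forall p, G (F p) = p) -> coverable (img F Y) /\ omeas (img F Y) = c * omeas Y.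
Proof.
  intros Hc Hcc HY HF HG Hinv. destruct (HF Y HY) as [H1 H2]. split; auto.
  destruct (HG _ H1) as [_ H3]. rewrite img_cancel in H3 by auto.
  assert (c * omeas Y <= c * (c' * omeas (img F Y))) by (apply Rmult_le_compat_l; lra).
  replace (c * (c' * omeas (img F Y))) with (omeas (img F Y)) in H by (rewrite <- Rmult_assoc, Hcc; ring).
  lra.
Qed.

End OuterMeasure.

(** * Boxes *)

Definition ilen (I : R * R) := snd I - fst I.

Definition imid (I : R * R) := (fst I + snd I) / 2.

(* Open intervals cannot tile [(a, b)], so the [k] equal cells are enlarged by the factor
   [1 + g] to make them overlap. *)
Lemma interval_subdivision a b k g : a < b -> (1 <= k)%nat -> 0 < g ->
  exists l : list (R * R), length l = k /\
   (forall x, a < x < b -> exists I, In I l /\ fst I < x < snd I) /\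
   (forall I, In I l -> ilen I = (b - a) * (1 + g) / INR k).
Proof.
  intros Hab Hk Hg.
  set (h := (b - a) / INR k). set (e := g * h / 2).
  exists (map (fun i => (a + INR i * h - e, a + INR (S i) * h + e)) (seq 0 k)).
  assert (Hk0 : 0 < INR k) by (apply lt_0_INR; lia).
  assert (Hh : 0 < h) by (unfold h; apply Rdiv_lt_0_compat; lra).
  assert (He : 0 < e) by (unfold e; nra).
  split; [rewrite length_map, length_seq; auto|split].
  - assert (Hc : forall n, (1 <= n <= k)%nat -> forall x, a < x < a + INR n * h + e ->
       exists i, (i < n)%nat /\ a + INR i * h - e < x < a + INR (S i) * h + e).
    { intros n Hn. induction n as [|n IH]; [lia|]. intros x Hx.
      destruct (Nat.eq_dec n 0) as [->|Hn0].
      - exists 0%nat. split; [lia|]. replace (INR 1) with 1 in * by reflexivity.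
        replace (INR 0) with 0 by reflexivity. lra.
      - destruct (Rlt_dec x (a + INR n * h + e)).
        + destruct (IH ltac:(lia) x ltac:(lra)) as [i [Hi Hx']]. exists i; split; [lia|auto].
        + exists n. split; [lia|]. rewrite S_INR in *. lra. }
    intros x Hx. destruct (Hc k ltac:(lia) x) as [i [Hi Hx']].
    { assert (INR k * h = b - a) by (unfold h; field; lra). lra. }
    exists (a + INR i * h - e, a + INR (S i) * h + e). split; [|simpl; auto].
    apply in_map_iff. exists i; split; auto. apply in_seq; lia.
  - intros I HI. apply in_map_iff in HI. destruct HI as [i [<- _]]. unfold ilen; cbn [fst snd].
    rewrite S_INR. unfold e, h. field. lra.
Qed.

Definition plen (I : R * R) := Rmax 0 (snd I - fst I).

Definition iinter (X I : R * R) : R * R := (Rmax (fst X) (fst I), Rmin (snd X) (snd I)).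

Lemma plen_ge0 I : 0 <= plen I.
Proof. apply Rmax_l. Qed.

Lemma Rmax_0_split3 p q a b : a <= b ->
  Rmax 0 (q - p) = Rmax 0 (Rmin q a - p) + Rmax 0 (Rmin q b - Rmax p a) + Rmax 0 (q - Rmax p b).
Proof.
  intros Hab. unfold Rmin.
  destruct (Rle_dec q a), (Rle_dec q b); unfold Rmax; destruct (Rle_dec p a), (Rle_dec p b);
  repeat match goal with |- context [Rle_dec ?x ?y] => destruct (Rle_dec x y) end; lra.
Qed.

Lemma plen_iinter_split3 X I a b : a <= b ->
  plen (iinter X I) = plen (iinter X (fst I, Rmin (snd I) a)) +
    plen (iinter X (Rmax (fst I) a, Rmin (snd I) b)) + plen (iinter X (Rmax (fst I) b, snd I)).
Proof.
  intros Hab. unfold plen, iinter; simpl. rewrite !Rmin_assoc, !Rmax_assoc. apply Rmax_0_split3; auto.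
Qed.

Lemma plen_split3 I a b : a <= b ->
  plen I = plen (fst I, Rmin (snd I) a) + plen (Rmax (fst I) a, Rmin (snd I) b) + plen (Rmax (fst I) b, snd I).
Proof. intros Hab. unfold plen; simpl. apply Rmax_0_split3; auto. Qed.

Definition vol3 := omeas in_box3 vol_box3.

Definition coverable3 := coverable in_box3 vol_box3.

Definition empty_box3 : box3 := ((0, 0), (0, 0), (0, 0)).

Lemma vol_box3_ge0 b : 0 <= vol_box3 b.
Proof. destruct b as [[i1 i2] i3]. simpl.
  repeat apply Rmult_le_pos; apply Rmax_l. Qed.

Lemma vol_box3_empty : vol_box3 empty_box3 = 0.
Proof. unfold vol_box3, empty_box3; simpl. rewrite Rminus_diag, Rmax_left; lra. Qed.

Lemma vol_box3_plen b : vol_box3 b = plen (fst (fst b)) * plen (snd (fst b)) * plen (snd b).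
Proof. destruct b as [[i1 i2] i3]. reflexivity. Qed.

Definition box3_inter (X K : box3) : box3 :=
  ((iinter (fst (fst X)) (fst (fst K)), iinter (snd (fst X)) (snd (fst K))), iinter (snd X) (snd K)).

Definition in_cbox3 (K : box3) (p : pt3) : Prop :=
  fst (fst (fst K)) <= fst (fst p) <= snd (fst (fst K)) /\
  fst (snd (fst K)) <= snd (fst p) <= snd (snd (fst K)) /\
  fst (snd K) <= snd p <= snd (snd K).

(* [K] minus [B0] is covered by the parts of [K] below and above [B0] in the first
   coordinate, then (within the middle slab) in the second, then in the third. *)
Lemma box3_minus_box_pieces K a1 b1 a2 b2 a3 b3 : a1 < b1 -> a2 < b2 -> a3 < b3 ->
  let B0 := (((a1, b1), (a2, b2)), (a3, b3)) in
  exists Ps : list box3,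
    (forall P, In P Ps -> forall p, in_cbox3 P p -> in_cbox3 K p /\ ~ in_box3 B0 p) /\
    vol_box3 K = lsum vol_box3 Ps + vol_box3 (box3_inter B0 K) /\
    (forall X, lsum (fun P => vol_box3 (box3_inter X P)) Ps <= vol_box3 (box3_inter X K)).
Proof.
  intros H1 H2 H3 B0. destruct K as [[[l1 h1] [l2 h2]] [l3 h3]].
  set (M1 := (Rmax l1 a1, Rmin h1 b1)). set (M2 := (Rmax l2 a2, Rmin h2 b2)). set (M3 := (Rmax l3 a3, Rmin h3 b3)).
  set (P1 := (((l1, Rmin h1 a1), (l2, h2)), (l3, h3))).
  set (P2 := (((Rmax l1 b1, h1), (l2, h2)), (l3, h3))).
  set (P3 := ((M1, (l2, Rmin h2 a2)), (l3, h3))).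
  set (P4 := ((M1, (Rmax l2 b2, h2)), (l3, h3))).
  set (P5 := ((M1, M2), (l3, Rmin h3 a3))).
  set (P6 := ((M1, M2), (Rmax l3 b3, h3))).
  set (C := ((M1, M2), M3)).
  exists (P1 :: P2 :: P3 :: P4 :: P5 :: P6 :: nil). split; [|split].
  - assert (Hr := fun x y => Rmin_l x y). assert (Hr2 := fun x y => Rmin_r x y).
    assert (Hm := fun x y => Rmax_l x y). assert (Hm2 := fun x y => Rmax_r x y).
    simpl. intros P HP [[x y] t]. unfold B0.
    destruct HP as [<-|[<-|[<-|[<-|[<-|[<-|[]]]]]]]; unfold P1, P2, P3, P4, P5, P6, M1, M2, in_cbox3; simpl;
      intros [Ha [Hb Hc]].
    + pose proof (Hr h1 a1); pose proof (Hr2 h1 a1). split; [repeat split|]; lra.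
    + pose proof (Hm l1 b1); pose proof (Hm2 l1 b1). split; [repeat split|]; lra.
    + pose proof (Hm l1 a1); pose proof (Hr h1 b1); pose proof (Hr h2 a2); pose proof (Hr2 h2 a2).
      split; [repeat split|]; lra.
    + pose proof (Hm l1 a1); pose proof (Hr h1 b1); pose proof (Hm l2 b2); pose proof (Hm2 l2 b2).
      split; [repeat split|]; lra.
    + pose proof (Hm l1 a1); pose proof (Hr h1 b1); pose proof (Hm l2 a2); pose proof (Hr h2 b2);
      pose proof (Hr h3 a3); pose proof (Hr2 h3 a3). split; [repeat split|]; lra.
    + pose proof (Hm l1 a1); pose proof (Hr h1 b1); pose proof (Hm l2 a2); pose proof (Hr h2 b2);
      pose proof (Hm l3 b3); pose proof (Hm2 l3 b3). split; [repeat split|]; lra.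
  - assert (HC : vol_box3 C = vol_box3 (box3_inter B0 (((l1, h1), (l2, h2)), (l3, h3)))).
    { unfold C, M1, M2, M3, B0, box3_inter, iinter. simpl.
      rewrite (Rmax_comm a1), (Rmax_comm a2), (Rmax_comm a3), (Rmin_comm b1), (Rmin_comm b2), (Rmin_comm b3).
      reflexivity. }
    rewrite <- HC. cbn [lsum fold_right]. rewrite !vol_box3_plen.
    unfold C, P1, P2, P3, P4, P5, P6; simpl.
    rewrite (plen_split3 (l1, h1) a1 b1) by lra. rewrite (plen_split3 (l2, h2) a2 b2) by lra.
    rewrite (plen_split3 (l3, h3) a3 b3) by lra. unfold M1, M2, M3; simpl. ring.
  - intros X. assert (HXC := vol_box3_ge0 (box3_inter X C)).
    assert (Hid : vol_box3 (box3_inter X (((l1, h1), (l2, h2)), (l3, h3))) =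
      lsum (fun P => vol_box3 (box3_inter X P)) (P1 :: P2 :: P3 :: P4 :: P5 :: P6 :: nil) + vol_box3 (box3_inter X C)).
    { cbn [lsum fold_right]. rewrite !vol_box3_plen. unfold C, P1, P2, P3, P4, P5, P6, box3_inter; simpl.
      rewrite (plen_iinter_split3 (fst (fst X)) (l1, h1) a1 b1) by lra.
      rewrite (plen_iinter_split3 (snd (fst X)) (l2, h2) a2 b2) by lra.
      rewrite (plen_iinter_split3 (snd X) (l3, h3) a3 b3) by lra. unfold M1, M2, M3; simpl. ring. }
    lra.
Qed.

Lemma vol_box3_le_list_cover : forall L K, (forall p, in_cbox3 K p -> exists B, In B L /\ in_box3 B p) ->
  vol_box3 K <= lsum (fun B => vol_box3 (box3_inter B K)) L.
Proof.
  induction L as [|B0 L IH]; intros K HK.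
  - destruct K as [[[l1 h1] [l2 h2]] [l3 h3]].
    destruct (Rle_dec l1 h1), (Rle_dec l2 h2), (Rle_dec l3 h3);
      try (destruct (HK ((l1, l2), l3)) as [B [[] _]]; unfold in_cbox3; simpl; lra);
      rewrite vol_box3_plen; simpl; unfold plen; simpl;
      try (rewrite (Rmax_left 0 (h1 - l1)) by lra); try (rewrite (Rmax_left 0 (h2 - l2)) by lra);
      try (rewrite (Rmax_left 0 (h3 - l3)) by lra); lra.
  - rewrite lsum_cons. pose proof (vol_box3_ge0 (box3_inter B0 K)).
    destruct B0 as [[[a1 b1] [a2 b2]] [a3 b3]].
    destruct (Rlt_dec a1 b1) as [H1|H1]; [destruct (Rlt_dec a2 b2) as [H2|H2]; [destruct (Rlt_dec a3 b3) as [H3|H3]|]|];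
    [| (enough (vol_box3 K <= lsum (fun B => vol_box3 (box3_inter B K)) L) by lra;
        apply IH; intros [[x y] t] Hp; destruct (HK _ Hp) as [B [[<-|HB] HpB]];
          [simpl in HpB; lra| eauto]) ..].
    destruct (box3_minus_box_pieces K a1 b1 a2 b2 a3 b3 H1 H2 H3) as [Ps [HPs [HvK Hsub]]].
    assert (HP : forall P, In P Ps -> vol_box3 P <= lsum (fun B => vol_box3 (box3_inter B P)) L).
    { intros P HinP. apply IH. intros p Hp. destruct (HPs P HinP p Hp) as [HpK Hn].
      destruct (HK p HpK) as [B [[<-|HB] HpB]]; [contradiction|eauto]. }
    assert (lsum vol_box3 Ps <= lsum (fun B => vol_box3 (box3_inter B K)) L).
    { eapply Rle_trans; [apply lsum_le; exact HP|]. rewrite lsum_comm. apply lsum_le. intros B _. apply Hsub. }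
    lra.
Qed.

(* Heine-Borel for a closed box: three nested tube-lemma arguments, one per coordinate. *)
Lemma cbox3_finite_subcover (c : nat -> box3) l1 h1 l2 h2 l3 h3 :
  (forall x y z, l1 <= x <= h1 -> l2 <= y <= h2 -> l3 <= z <= h3 -> exists n, in_box3 (c n) ((x, y), z)) ->
  exists N, forall x y z, l1 <= x <= h1 -> l2 <= y <= h2 -> l3 <= z <= h3 ->
     exists n, (n < N)%nat /\ in_box3 (c n) ((x, y), z).
Proof.
  intros Hc.
  assert (tube_z : forall x y, l1 <= x <= h1 -> l2 <= y <= h2 -> exists N, forall z, l3 <= z <= h3 ->
     forall x' y', Rabs (x' - x) < / (INR N + 1) -> Rabs (y' - y) < / (INR N + 1) ->
     exists n, (n < N)%nat /\ in_box3 (c n) ((x', y'), z)).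
  { intros x y Hx Hy.
    apply (interval_gauge_uniform l3 h3 (fun z N => forall x' y', Rabs (x' - x) < / (INR N + 1) -> Rabs (y' - y) < / (INR N + 1) ->
     exists n, (n < N)%nat /\ in_box3 (c n) ((x', y'), z))).
    - intros z N N' HNN' H x' y' H1 H2. pose proof (inv_succ_le _ _ HNN').
      destruct (H x' y') as [n [Hn Hin]]; try lra. exists n; split; auto; lia.
    - intros z Hz. destruct (Hc x y z Hx Hy Hz) as [n0 Hn0].
      destruct (c n0) as [[[a1 b1] [a2 b2]] [a3 b3]] eqn:Ec. simpl in Hn0. destruct Hn0 as [Hx0 [Hy0 Hz0]].
      destruct (open_interval_nbhd x a1 b1 Hx0) as [d1 [Hd1 Hd1']].
      destruct (open_interval_nbhd y a2 b2 Hy0) as [d2 [Hd2 Hd2']].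
      destruct (open_interval_nbhd z a3 b3 Hz0) as [d3 [Hd3 Hd3']].
      destruct (inv_succ_small (Rmin d1 d2)) as [N1 HN1]; [apply Rmin_glb_lt; auto|].
      exists d3, (max N1 (S n0)). split; auto. intros z' Hz' x' y' H1 H2.
      specialize (HN1 (max N1 (S n0)) ltac:(lia)).
      pose proof (Rmin_l d1 d2). pose proof (Rmin_r d1 d2).
      exists n0. split; [lia|]. rewrite Ec. simpl. split; [apply Hd1'|split; [apply Hd2'|apply Hd3']]; lra. }
  assert (tube_yz : forall x, l1 <= x <= h1 -> exists N, forall y, l2 <= y <= h2 ->
     forall x', Rabs (x' - x) < / (INR N + 1) -> forall z, l3 <= z <= h3 ->
     exists n, (n < N)%nat /\ in_box3 (c n) ((x', y), z)).
  { intros x Hx.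
    apply (interval_gauge_uniform l2 h2 (fun y N => forall x', Rabs (x' - x) < / (INR N + 1) -> forall z, l3 <= z <= h3 ->
     exists n, (n < N)%nat /\ in_box3 (c n) ((x', y), z))).
    - intros y N N' HNN' H x' H1 z Hz. pose proof (inv_succ_le _ _ HNN').
      destruct (H x' ltac:(lra) z Hz) as [n [Hn Hin]]. exists n; split; auto; lia.
    - intros y Hy. destruct (tube_z x y Hx Hy) as [N3 HN3].
      exists (/ (INR N3 + 1)), N3. split; [apply Rinv_0_lt_compat; pose proof (pos_INR N3); lra|].
      intros y' Hy' x' Hx' z Hz. apply HN3; auto. }
  destruct (interval_gauge_uniform l1 h1 (fun x N => forall y z, l2 <= y <= h2 -> l3 <= z <= h3 ->
     exists n, (n < N)%nat /\ in_box3 (c n) ((x, y), z))) as [N HN].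
  - intros x N N' HNN' H y z Hy Hz. destruct (H y z Hy Hz) as [n [Hn Hin]]. exists n; split; auto; lia.
  - intros x Hx. destruct (tube_yz x Hx) as [N2 HN2].
    exists (/ (INR N2 + 1)), N2. split; [apply Rinv_0_lt_compat; pose proof (pos_INR N2); lra|].
    intros x' Hx' y z Hy Hz. apply HN2; auto.
  - exists N. intros x y z Hx Hy Hz. apply HN; auto.
Qed.

Lemma vol_box3_inter_le X K : vol_box3 (box3_inter X K) <= vol_box3 X.
Proof.
  rewrite !vol_box3_plen. unfold box3_inter; simpl.
  assert (forall I J, plen (iinter I J) <= plen I).
  { intros I J. unfold plen, iinter; simpl. apply Rmax_lub; [apply Rmax_l|].
    eapply Rle_trans; [|apply Rmax_r]. pose proof (Rmin_l (snd I) (snd J)). pose proof (Rmax_l (fst I) (fst J)). lra. }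
  pose proof (plen_ge0 (iinter (fst (fst X)) (fst (fst K)))). pose proof (plen_ge0 (iinter (snd (fst X)) (snd (fst K)))).
  pose proof (plen_ge0 (iinter (snd X) (snd K))).
  apply Rmult_le_compat; try (apply Rmult_le_pos; auto); auto.
  apply Rmult_le_compat; auto.
Qed.

Lemma vol3_ge_cbox3 l1 h1 l2 h2 l3 h3 (E : pt3 -> Prop) :
  l1 <= h1 -> l2 <= h2 -> l3 <= h3 ->
  (forall x y z, l1 <= x <= h1 -> l2 <= y <= h2 -> l3 <= z <= h3 -> E ((x, y), z)) -> coverable3 E ->
  (h1 - l1) * (h2 - l2) * (h3 - l3) <= vol3 E.
Proof.
  intros H1 H2 H3 HE Hf. apply (omeas_ge in_box3 vol_box3 vol_box3_ge0); [exact Hf|].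
  intros s [c [Hc Hs]].
  destruct (cbox3_finite_subcover c l1 h1 l2 h2 l3 h3) as [N HN].
  { intros x y z Hx Hy Hz. apply Hc; auto. }
  set (K := (((l1, h1), (l2, h2)), (l3, h3))).
  assert (vol_box3 K <= lsum (fun B => vol_box3 (box3_inter B K)) (map c (seq 0 N))).
  { apply vol_box3_le_list_cover. intros [[x y] z] [Hx [Hy Hz]]. simpl in Hx, Hy, Hz.
    destruct (HN x y z Hx Hy Hz) as [n [Hn Hin]]. exists (c n). split; auto.
    apply in_map_iff. exists n; split; auto. apply in_seq; lia. }
  assert (lsum (fun B => vol_box3 (box3_inter B K)) (map c (seq 0 N)) <= lsum vol_box3 (map c (seq 0 N))).
  { apply lsum_le. intros; apply vol_box3_inter_le. }
  rewrite (lsum_map_seq vol_box3) in H0. pose proof (infinite_sum_ge_sumN _ _ N (fun k => vol_box3_ge0 (c k)) Hs).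
  assert (vol_box3 K = (h1 - l1) * (h2 - l2) * (h3 - l3)).
  { unfold K, vol_box3. simpl. rewrite !Rmax_0_ge0 by lra. ring. }
  lra.
Qed.

Definition close3 (r : R) (p q : pt3) : Prop :=
  Rabs (fst (fst p) - fst (fst q)) < r /\ Rabs (snd (fst p) - snd (fst q)) < r /\ Rabs (snd p - snd q) < r.

Lemma box3_grid a1 b1 a2 b2 a3 b3 k g : a1 < b1 -> a2 < b2 -> a3 < b3 -> (1 <= k)%nat -> 0 < g ->
  let B := (((a1, b1), (a2, b2)), (a3, b3)) in
  exists l, (forall p, in_box3 B p -> exists b', In b' l /\ in_box3 b' p) /\
    lsum vol_box3 l = vol_box3 B * ((1 + g) * (1 + g) * (1 + g)) /\
    (forall b', In b' l -> ilen (fst (fst b')) = (b1 - a1) * (1 + g) / INR k /\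
       ilen (snd (fst b')) = (b2 - a2) * (1 + g) / INR k /\ ilen (snd b') = (b3 - a3) * (1 + g) / INR k).
Proof.
  intros H1 H2 H3 Hk Hg B.
  destruct (interval_subdivision a1 b1 k g H1 Hk Hg) as [l1 [Hl1a [Hl1b Hl1c]]].
  destruct (interval_subdivision a2 b2 k g H2 Hk Hg) as [l2 [Hl2a [Hl2b Hl2c]]].
  destruct (interval_subdivision a3 b3 k g H3 Hk Hg) as [l3 [Hl3a [Hl3b Hl3c]]].
  assert (Hk0 : 0 < INR k) by (apply lt_0_INR; lia).
  set (h1 := (b1 - a1) * (1 + g) / INR k). set (h2 := (b2 - a2) * (1 + g) / INR k).
  set (h3 := (b3 - a3) * (1 + g) / INR k).
  assert (Hh1 : 0 < h1) by (unfold h1; apply Rdiv_lt_0_compat; nra).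
  assert (Hh2 : 0 < h2) by (unfold h2; apply Rdiv_lt_0_compat; nra).
  assert (Hh3 : 0 < h3) by (unfold h3; apply Rdiv_lt_0_compat; nra).
  exists (flat_map (fun J1 => flat_map (fun J2 => map (fun J3 => ((J1, J2), J3)) l3) l2) l1).
  split; [|split].
  - intros [[x y] t] Hp. simpl in Hp. destruct Hp as [Hx [Hy Ht]].
    destruct (Hl1b x Hx) as [J1 [HJ1 HxJ]]. destruct (Hl2b y Hy) as [J2 [HJ2 HyJ]].
    destruct (Hl3b t Ht) as [J3 [HJ3 HtJ]].
    exists ((J1, J2), J3). split.
    + apply in_flat_map. exists J1. split; auto. apply in_flat_map. exists J2. split; auto.
      apply in_map_iff. exists J3. split; auto.
    + simpl. auto.
  - rewrite lsum_flat_map.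
    rewrite (lsum_const _ l1 (INR k * (INR k * (h1 * h2 * h3)))).
    2:{ intros J1 HJ1. rewrite lsum_flat_map.
        rewrite (lsum_const _ l2 (INR k * (h1 * h2 * h3))); [rewrite Hl2a; auto|].
        intros J2 HJ2. rewrite lsum_map. rewrite (lsum_const _ l3 (h1 * h2 * h3)); [rewrite Hl3a; auto|].
        intros J3 HJ3. unfold vol_box3; simpl.
        pose proof (Hl1c J1 HJ1) as E1. pose proof (Hl2c J2 HJ2) as E2. pose proof (Hl3c J3 HJ3) as E3.
        unfold ilen in E1, E2, E3. fold h1 in E1. fold h2 in E2. fold h3 in E3.
        rewrite E1, E2, E3, !Rmax_0_ge0 by lra. ring. }
    rewrite Hl1a. unfold B, vol_box3, h1, h2, h3; simpl. rewrite !Rmax_0_ge0 by lra. field. lra.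
  - intros b' Hb'.
    apply in_flat_map in Hb'. destruct Hb' as [J1 [HJ1 Hb']].
    apply in_flat_map in Hb'. destruct Hb' as [J2 [HJ2 Hb']].
    apply in_map_iff in Hb'. destruct Hb' as [J3 [<- HJ3]]. simpl. auto.
Qed.

Lemma box3_fine_refinement r : 0 < r -> fine_refinement in_box3 vol_box3 (close3 r).
Proof.
  intros Hr b eps He. destruct b as [[[a1 b1] [a2 b2]] [a3 b3]].
  destruct (Rlt_dec a1 b1) as [H1|H1]; [destruct (Rlt_dec a2 b2) as [H2|H2]; [destruct (Rlt_dec a3 b3) as [H3|H3]|]|];
  try (exists nil; split; [intros [[x y] t] Hp; simpl in Hp; lra|
     split; [change (lsum vol_box3 nil) with 0; pose proof (vol_box3_ge0 (((a1, b1), (a2, b2)), (a3, b3))); lra|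
     intros b' []]]).
  set (L1 := b1 - a1). set (L2 := b2 - a2). set (L3 := b3 - a3).
  assert (HV : 0 <= L1 * L2 * L3) by (unfold L1, L2, L3; repeat apply Rmult_le_pos; lra).
  destruct (exists_small_ratio (L1 * L2 * L3) (eps / 3)) as [g [Hg Hg2]]; [auto|lra|].
  destruct (exists_nat_div_lt (2 * (L1 + L2 + L3)) r) as [k [Hk Hk2]]; [lra|].
  destruct (box3_grid a1 b1 a2 b2 a3 b3 k g H1 H2 H3 Hk (proj1 Hg)) as [l [Hcov [Hvol Hlen]]].
  assert (Hk0 : 0 < INR k) by (apply lt_0_INR; lia).
  assert (Hsmall : forall L, 0 < L -> L <= L1 + L2 + L3 -> L * (1 + g) / INR k < r).
  { intros L HL HL'. eapply Rle_lt_trans; [|apply Hk2]. unfold Rdiv. apply Rmult_le_compat_r.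
    left; apply Rinv_0_lt_compat; auto. destruct Hg; nra. }
  exists l. split; [exact Hcov|split].
  - rewrite Hvol. unfold vol_box3; simpl. rewrite !Rmax_0_ge0 by lra. fold L1 L2 L3.
    assert (Hg3 : (1 + g) * (1 + g) * (1 + g) <= 1 + 7 * g) by (destruct Hg; nra).
    assert (L1 * L2 * L3 * ((1 + g) * (1 + g) * (1 + g)) <= L1 * L2 * L3 * (1 + 7 * g)) by (apply Rmult_le_compat_l; auto).
    assert (L1 * L2 * L3 * (1 + 7 * g) = L1 * L2 * L3 + 7 / 3 * (3 * g * (L1 * L2 * L3))) by field. lra.
  - intros [[I1 I2] I3] Hb' [[x y] t] [[x' y'] t'] Hp Hq. destruct (Hlen _ Hb') as [E1 [E2 E3]].
    simpl in Hp, Hq, E1, E2, E3. unfold ilen in E1, E2, E3. unfold close3; simpl.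
    assert (L1 * (1 + g) / INR k < r) by (apply Hsmall; unfold L1, L2, L3 in *; lra).
    assert (L2 * (1 + g) / INR k < r) by (apply Hsmall; unfold L1, L2, L3 in *; lra).
    assert (L3 * (1 + g) / INR k < r) by (apply Hsmall; unfold L1, L2, L3 in *; lra).
    fold L1 L2 L3 in E1, E2, E3. repeat split; apply Rabs_lt_of_between; lra.
Qed.

Lemma vol3_separated_ge A B r : 0 < r -> (forall p q, A p -> B q -> ~ close3 r p q) ->
  coverable3 (fun p => A p \/ B p) -> coverable3 A /\ coverable3 B /\ vol3 A + vol3 B <= vol3 (fun p => A p \/ B p).
Proof.
  intros Hr Hs HU.
  apply (omeas_separated_ge in_box3 vol_box3 vol_box3_ge0 empty_box3 vol_box3_empty A B (close3 r)); auto.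
  apply box3_fine_refinement; auto.
Qed.

Definition vol2 := omeas in_box2 vol_box2.

Definition coverable2 := coverable in_box2 vol_box2.

Definition empty_box2 : box2 := ((0, 0), (0, 0)).

Lemma vol_box2_ge0 b : 0 <= vol_box2 b.
Proof. unfold vol_box2. apply Rmult_le_pos; apply Rmax_l. Qed.

Lemma vol_box2_empty : vol_box2 empty_box2 = 0.
Proof. unfold vol_box2, empty_box2; simpl. rewrite Rminus_diag, Rmax_left; lra. Qed.

(** * Invariance of volume under scalings, shears and rotations *)

Definition iscale (a : R) (I : R * R) : R * R :=
  if Rle_dec 0 a then (a * fst I, a * snd I) else (a * snd I, a * fst I).

Lemma iscale_mem a I x : a <> 0 -> fst I < x < snd I -> fst (iscale a I) < a * x < snd (iscale a I).
Proof. intros Ha Hx. unfold iscale. destruct (Rle_dec 0 a); simpl.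
  - assert (0 < a) by lra. split; apply Rmult_lt_compat_l; lra.
  - split; apply Rmult_lt_gt_compat_neg_l; lra. Qed.

Lemma iscale_len a I : Rmax 0 (snd (iscale a I) - fst (iscale a I)) = Rabs a * Rmax 0 (snd I - fst I).
Proof. unfold iscale. destruct (Rle_dec 0 a); simpl.
  - rewrite Rabs_right by lra. replace (a * snd I - a * fst I) with (a * (snd I - fst I)) by ring.
    unfold Rmax. destruct (Rle_dec 0 (a * (snd I - fst I))), (Rle_dec 0 (snd I - fst I)); nra.
  - rewrite Rabs_left by lra. replace (a * fst I - a * snd I) with (- a * (snd I - fst I)) by ring.
    unfold Rmax. destruct (Rle_dec 0 (- a * (snd I - fst I))), (Rle_dec 0 (snd I - fst I)); nra. Qed.

Definition scale3 (a b c : R) (p : pt3) : pt3 := ((a * fst (fst p), b * snd (fst p)), c * snd p).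

Lemma vol3_scale3_le a b c Y : a <> 0 -> b <> 0 -> c <> 0 -> coverable3 Y ->
  coverable3 (img (scale3 a b c) Y) /\ vol3 (img (scale3 a b c) Y) <= (Rabs a * Rabs b * Rabs c) * vol3 Y.
Proof.
  intros Ha Hb Hc HY.
  apply (omeas_image_boxwise_le in_box3 vol_box3 vol_box3_ge0 empty_box3 vol_box3_empty _
    (fun bx => ((iscale a (fst (fst bx)), iscale b (snd (fst bx))), iscale c (snd bx))));
    auto.
  - pose proof (Rabs_pos a); pose proof (Rabs_pos b); pose proof (Rabs_pos c). repeat apply Rmult_le_pos; auto.
  - intros [[I1 I2] I3] [[x y] t] H. simpl in H |- *. destruct H as [H1 [H2 H3]].
    repeat split; try apply iscale_mem; auto; apply iscale_mem; auto.
  - intros [[I1 I2] I3]. unfold vol_box3. simpl. rewrite !iscale_len. right; ring.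
Qed.

Lemma vol3_scale3 a b c Y : a <> 0 -> b <> 0 -> c <> 0 -> coverable3 Y ->
  coverable3 (img (scale3 a b c) Y) /\ vol3 (img (scale3 a b c) Y) = (Rabs a * Rabs b * Rabs c) * vol3 Y.
Proof.
  intros Ha Hb Hc HY.
  apply (omeas_image_eq in_box3 vol_box3 _ (scale3 (/a) (/b) (/c)) _ (Rabs (/a) * Rabs (/b) * Rabs (/c))); auto.
  - pose proof (Rabs_pos_lt a Ha); pose proof (Rabs_pos_lt b Hb); pose proof (Rabs_pos_lt c Hc).
    repeat apply Rmult_lt_0_compat; auto.
  - rewrite !Rabs_inv. field. repeat split; apply Rabs_no_R0; auto.
  - intros Z HZ; apply vol3_scale3_le; auto.
  - intros Z HZ; apply vol3_scale3_le; auto; apply Rinv_neq_0_compat; auto.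
  - intros [[x y] t]. unfold scale3; simpl. f_equal; [f_equal|]; field; auto.
Qed.

Definition scale2 (a b : R) (p : pt2) : pt2 := (a * fst p, b * snd p).

Lemma vol2_scale2_le a b Y : a <> 0 -> b <> 0 -> coverable2 Y ->
  coverable2 (img (scale2 a b) Y) /\ vol2 (img (scale2 a b) Y) <= (Rabs a * Rabs b) * vol2 Y.
Proof.
  intros Ha Hb HY.
  apply (omeas_image_boxwise_le in_box2 vol_box2 vol_box2_ge0 empty_box2 vol_box2_empty _ (fun bx => (iscale a (fst bx), iscale b (snd bx))));
    auto.
  - pose proof (Rabs_pos a); pose proof (Rabs_pos b). apply Rmult_le_pos; auto.
  - intros [I1 I2] [x y] H. unfold in_box2 in *. simpl in H |- *. destruct H as [H1 H2].
    split; apply iscale_mem; auto.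
  - intros [I1 I2]. unfold vol_box2. simpl. rewrite !iscale_len. right; ring.
Qed.

Lemma vol2_scale2 a b Y : a <> 0 -> b <> 0 -> coverable2 Y ->
  coverable2 (img (scale2 a b) Y) /\ vol2 (img (scale2 a b) Y) = (Rabs a * Rabs b) * vol2 Y.
Proof.
  intros Ha Hb HY.
  apply (omeas_image_eq in_box2 vol_box2 _ (scale2 (/a) (/b)) _ (Rabs (/a) * Rabs (/b))); auto.
  - pose proof (Rabs_pos_lt a Ha); pose proof (Rabs_pos_lt b Hb). apply Rmult_lt_0_compat; auto.
  - rewrite !Rabs_inv. field. split; apply Rabs_no_R0; auto.
  - intros Z HZ; apply vol2_scale2_le; auto.
  - intros Z HZ; apply vol2_scale2_le; auto; apply Rinv_neq_0_compat; auto.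
  - intros [x y]. unfold scale2; simpl. f_equal; field; auto.
Qed.

Definition swap13 (p : pt3) : pt3 := ((snd p, snd (fst p)), fst (fst p)).

Definition swap23 (p : pt3) : pt3 := ((fst (fst p), snd p), snd (fst p)).

Lemma vol3_swap13_le Y : coverable3 Y -> coverable3 (img swap13 Y) /\ vol3 (img swap13 Y) <= 1 * vol3 Y.
Proof.
  intros HY. apply (omeas_image_boxwise_le in_box3 vol_box3 vol_box3_ge0 empty_box3 vol_box3_empty _
    (fun bx => ((snd bx, snd (fst bx)), fst (fst bx))));
    auto; try lra.
  - intros [[I1 I2] I3] [[x y] t] H. simpl in H |- *. tauto.
  - intros [[I1 I2] I3]. unfold vol_box3. simpl. right; ring.
Qed.

Lemma vol3_swap23_le Y : coverable3 Y -> coverable3 (img swap23 Y) /\ vol3 (img swap23 Y) <= 1 * vol3 Y.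
Proof.
  intros HY. apply (omeas_image_boxwise_le in_box3 vol_box3 vol_box3_ge0 empty_box3 vol_box3_empty _
    (fun bx => ((fst (fst bx), snd bx), snd (fst bx))));
    auto; try lra.
  - intros [[I1 I2] I3] [[x y] t] H. simpl in H |- *. tauto.
  - intros [[I1 I2] I3]. unfold vol_box3. simpl. right; ring.
Qed.

Lemma vol3_swap13 Y : coverable3 Y -> coverable3 (img swap13 Y) /\ vol3 (img swap13 Y) = vol3 Y.
Proof. intros HY. replace (vol3 Y) with (1 * vol3 Y) by ring.
  apply (omeas_image_eq in_box3 vol_box3 _ swap13 1 1); auto; try lra. apply vol3_swap13_le. apply vol3_swap13_le.
  intros [[x y] t]; reflexivity. Qed.

Lemma vol3_swap23 Y : coverable3 Y -> coverable3 (img swap23 Y) /\ vol3 (img swap23 Y) = vol3 Y.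
Proof. intros HY. replace (vol3 Y) with (1 * vol3 Y) by ring.
  apply (omeas_image_eq in_box3 vol_box3 _ swap23 1 1); auto; try lra. apply vol3_swap23_le. apply vol3_swap23_le.
  intros [[x y] t]; reflexivity. Qed.

Definition lipschitz2 (K : R) (f : pt2 -> R) :=
  forall x y, Rabs (f x - f y) <= K * (Rabs (fst x - fst y) + Rabs (snd x - snd y)).

Definition vshift (f : pt2 -> R) (p : pt3) : pt3 := (fst p, snd p + f (fst p)).

Lemma vshift_cover_volume_le L1 L2 L3 K g k eps : 0 < L1 -> 0 < L2 -> 0 < L3 -> 0 <= K ->
  0 < g <= 1 -> 3 * g * (L1 * L2 * L3) <= eps / 2 -> (1 <= k)%nat ->
  8 * (L1 * L2 * K * (L1 + L2)) / INR k < eps / 2 ->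
  let h1 := L1 * (1 + g) / INR k in let h2 := L2 * (1 + g) / INR k in
  INR k * (INR k * (h1 * h2 * (L3 + 2 * (K * (h1 + h2) / 2)))) <= L1 * L2 * L3 + eps.
Proof.
  intros H1 H2 H3 HK Hg Hg2 Hk Hk2 h1 h2.
  assert (Hk0 : 0 < INR k) by (apply lt_0_INR; lia).
  replace (INR k * (INR k * (h1 * h2 * (L3 + 2 * (K * (h1 + h2) / 2)))))
    with (L1 * L2 * L3 * ((1 + g) * (1 + g)) + (L1 * L2 * K * (L1 + L2)) * ((1 + g) * (1 + g) * (1 + g)) / INR k)
    by (unfold h1, h2; field; lra).
  assert (HV : 0 <= L1 * L2 * L3) by (repeat apply Rmult_le_pos; lra).
  assert (HW : 0 <= L1 * L2 * K * (L1 + L2)) by (repeat apply Rmult_le_pos; lra).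
  assert (L1 * L2 * L3 * ((1 + g) * (1 + g)) <= L1 * L2 * L3 + 3 * g * (L1 * L2 * L3)).
  { assert (Hg3 : (1 + g) * (1 + g) <= 1 + 3 * g) by (destruct Hg; nra).
    apply Rle_trans with (L1 * L2 * L3 * (1 + 3 * g)); [apply Rmult_le_compat_l; auto|right; ring]. }
  assert ((L1 * L2 * K * (L1 + L2)) * ((1 + g) * (1 + g) * (1 + g)) / INR k <= 8 * (L1 * L2 * K * (L1 + L2)) / INR k).
  { unfold Rdiv. apply Rmult_le_compat_r; [left; apply Rinv_0_lt_compat; auto|].
    assert ((1 + g) * (1 + g) * (1 + g) <= 8) by (destruct Hg; nra). nra. }
  lra.
Qed.

(* Over a small square cell, the graph of a Lipschitz [f] stays within [dl] of its value at
   the centre, so the shifted part of a box fits in a box only [2 dl] taller. *)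
Lemma vshift_box_cover f K b eps : 0 <= K -> lipschitz2 K f -> 0 < eps ->
  exists l, (forall p, in_box3 b p -> exists b', In b' l /\ in_box3 b' (vshift f p)) /\
    lsum vol_box3 l <= vol_box3 b + eps.
Proof.
  intros HK Hf He. destruct b as [[[a1 b1] [a2 b2]] [a3 b3]].
  destruct (Rlt_dec a1 b1) as [H1|H1]; [destruct (Rlt_dec a2 b2) as [H2|H2]; [destruct (Rlt_dec a3 b3) as [H3|H3]|]|];
  try (exists nil; split; [intros [[x y] t] Hp; simpl in Hp; lra|
    change (lsum vol_box3 nil) with 0; pose proof (vol_box3_ge0 (((a1, b1), (a2, b2)), (a3, b3))); lra]).
  destruct (exists_small_ratio ((b1 - a1) * (b2 - a2) * (b3 - a3)) (eps / 2)) as [g [Hg Hg2]];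
    [repeat apply Rmult_le_pos; lra|lra|].
  destruct (exists_nat_div_lt (8 * ((b1 - a1) * (b2 - a2) * K * ((b1 - a1) + (b2 - a2)))) (eps / 2)) as [k [Hk Hk2]]; [lra|].
  destruct (interval_subdivision a1 b1 k g H1 Hk (proj1 Hg)) as [l1 [Hl1a [Hl1b Hl1c]]].
  destruct (interval_subdivision a2 b2 k g H2 Hk (proj1 Hg)) as [l2 [Hl2a [Hl2b Hl2c]]].
  set (h1 := (b1 - a1) * (1 + g) / INR k). set (h2 := (b2 - a2) * (1 + g) / INR k).
  set (dl := K * (h1 + h2) / 2).
  assert (Hk0 : 0 < INR k) by (apply lt_0_INR; lia).
  assert (Hh1 : 0 < h1) by (unfold h1; apply Rdiv_lt_0_compat; nra).
  assert (Hh2 : 0 < h2) by (unfold h2; apply Rdiv_lt_0_compat; nra).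
  assert (Hdl : 0 <= dl) by (unfold dl; nra).
  exists (flat_map (fun J1 => map (fun J2 => ((J1, J2), (a3 + f (imid J1, imid J2) - dl, b3 + f (imid J1, imid J2) + dl))) l2) l1).
  split.
  - intros [[x y] t] Hp. simpl in Hp. destruct Hp as [Hx [Hy Ht]].
    destruct (Hl1b x Hx) as [J1 [HJ1 HxJ]]. destruct (Hl2b y Hy) as [J2 [HJ2 HyJ]].
    eexists. split.
    + apply in_flat_map. exists J1. split; auto. apply in_map_iff. exists J2. split; [reflexivity|auto].
    + unfold vshift; simpl. pose proof (Hl1c J1 HJ1) as E1. pose proof (Hl2c J2 HJ2) as E2.
      unfold ilen in E1, E2. fold h1 in E1. fold h2 in E2.
      specialize (Hf (x, y) (imid J1, imid J2)). simpl in Hf. unfold imid in Hf.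
      assert (Rabs (x - (fst J1 + snd J1) / 2) <= h1 / 2) by (apply Rabs_le; lra).
      assert (Rabs (y - (fst J2 + snd J2) / 2) <= h2 / 2) by (apply Rabs_le; lra).
      assert (Hfd : Rabs (f (x, y) - f ((fst J1 + snd J1) / 2, (fst J2 + snd J2) / 2)) <= dl).
      { unfold dl. eapply Rle_trans; [apply Hf|]. nra. }
      apply Rabs_le_between in Hfd. unfold imid. repeat split; lra.
  - rewrite lsum_flat_map.
    rewrite (lsum_const _ l1 (INR k * (h1 * h2 * ((b3 - a3) + 2 * dl)))).
    2:{ intros J1 HJ1. rewrite lsum_map. rewrite (lsum_const _ l2 (h1 * h2 * ((b3 - a3) + 2 * dl))); [rewrite Hl2a; auto|].
        intros J2 HJ2. unfold vol_box3; simpl. pose proof (Hl1c J1 HJ1) as E1. pose proof (Hl2c J2 HJ2) as E2.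
        unfold ilen in E1, E2. fold h1 in E1. fold h2 in E2.
        rewrite E1, E2, !Rmax_0_ge0 by lra. ring. }
    rewrite Hl1a. unfold vol_box3; simpl. rewrite !Rmax_0_ge0 by lra.
    apply vshift_cover_volume_le; auto; lra.
Qed.

Lemma vol3_vshift_le f K Y : 0 <= K -> lipschitz2 K f -> coverable3 Y -> coverable3 (img (vshift f) Y) /\ vol3 (img (vshift f) Y) <= vol3 Y.
Proof.
  intros HK Hf HY. replace (vol3 Y) with (1 * vol3 Y) by ring.
  apply (omeas_image_le in_box3 vol_box3 vol_box3_ge0 empty_box3 vol_box3_empty); auto; [lra|].
  intros b eps He. destruct (vshift_box_cover f K b eps HK Hf He) as [l [Hl1 Hl2]].
  exists l. split; [intros p Hp _; auto|lra].
Qed.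

Lemma vol3_vshift f K Y : 0 <= K -> lipschitz2 K f -> coverable3 Y -> coverable3 (img (vshift f) Y) /\ vol3 (img (vshift f) Y) = vol3 Y.
Proof.
  intros HK Hf HY. replace (vol3 Y) with (1 * vol3 Y) by ring.
  apply (omeas_image_eq in_box3 vol_box3 _ (vshift (fun x => - f x)) 1 1); auto; try lra.
  - intros Z HZ. rewrite Rmult_1_l. apply (vol3_vshift_le f K); auto.
  - intros Z HZ. rewrite Rmult_1_l. apply (vol3_vshift_le _ K); auto.
    intros x y. replace (- f x - - f y) with (- (f x - f y)) by ring. rewrite Rabs_Ropp. apply Hf.
  - intros [xy t]. unfold vshift; simpl. f_equal. ring.
Qed.

Definition lipschitz1 (K : R) (g : R -> R) := forall x y, Rabs (g x - g y) <= K * Rabs (x - y).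

Lemma lipschitz1_linear c : lipschitz1 (Rabs c) (fun y => c * y).
Proof. intros x y. rewrite <- Rmult_minus_distr_l, Rabs_mult. lra. Qed.

Definition shear1 (g : R -> R) (p : pt3) : pt3 := ((fst (fst p) + g (snd (fst p)), snd (fst p)), snd p).

Definition shear2 (g : R -> R) (p : pt3) : pt3 := ((fst (fst p), snd (fst p) + g (fst (fst p))), snd p).

(* A shear in the horizontal plane is a vertical shift conjugated by a swap of coordinates. *)
Lemma vol3_shear1 g K Y : 0 <= K -> lipschitz1 K g -> coverable3 Y -> coverable3 (img (shear1 g) Y) /\ vol3 (img (shear1 g) Y) = vol3 Y.
Proof.
  intros HK Hg HY.
  assert (E : img (shear1 g) Y = img swap13 (img (vshift (fun p => g (snd p))) (img swap13 Y))).
  { rewrite !img_comp. apply img_ext. intros [[x y] t] _. reflexivity. }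
  rewrite E. destruct (vol3_swap13 Y HY) as [F1 E1].
  destruct (vol3_vshift (fun p => g (snd p)) K (img swap13 Y) HK) as [F2 E2]; auto.
  { intros x y. eapply Rle_trans; [apply Hg|]. pose proof (Rabs_pos (fst x - fst y)). nra. }
  destruct (vol3_swap13 _ F2) as [F3 E3]. split; auto. lra.
Qed.

Lemma vol3_shear2 g K Y : 0 <= K -> lipschitz1 K g -> coverable3 Y -> coverable3 (img (shear2 g) Y) /\ vol3 (img (shear2 g) Y) = vol3 Y.
Proof.
  intros HK Hg HY.
  assert (E : img (shear2 g) Y = img swap23 (img (vshift (fun p => g (fst p))) (img swap23 Y))).
  { rewrite !img_comp. apply img_ext. intros [[x y] t] _. reflexivity. }
  rewrite E. destruct (vol3_swap23 Y HY) as [F1 E1].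
  destruct (vol3_vshift (fun p => g (fst p)) K (img swap23 Y) HK) as [F2 E2]; auto.
  { intros x y. eapply Rle_trans; [apply Hg|]. pose proof (Rabs_pos (snd x - snd y)). nra. }
  destruct (vol3_swap23 _ F2) as [F3 E3]. split; auto. lra.
Qed.

Definition hshear (g : R -> R) (p : pt2) : pt2 := (fst p + g (snd p), snd p).

Lemma hshear_cover_volume_le L1 L2 K g k eps : 0 < L1 -> 0 < L2 -> 0 <= K ->
  0 < g <= 1 -> 3 * g * (L1 * L2) <= eps / 2 -> (1 <= k)%nat -> 4 * (K * L2 * L2) / INR k < eps / 2 ->
  let h := L2 * (1 + g) / INR k in INR k * ((L1 + K * h) * h) <= L1 * L2 + eps.
Proof.
  intros H1 H2 HK Hg Hg2 Hk Hk2 h.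
  assert (Hk0 : 0 < INR k) by (apply lt_0_INR; lia).
  replace (INR k * ((L1 + K * h) * h)) with (L1 * L2 * (1 + g) + (K * L2 * L2) * ((1 + g) * (1 + g)) / INR k)
    by (unfold h; field; lra).
  assert (HV : 0 <= L1 * L2) by (apply Rmult_le_pos; lra).
  assert (HW : 0 <= K * L2 * L2) by (repeat apply Rmult_le_pos; lra).
  assert ((K * L2 * L2) * ((1 + g) * (1 + g)) / INR k <= 4 * (K * L2 * L2) / INR k).
  { unfold Rdiv. apply Rmult_le_compat_r; [left; apply Rinv_0_lt_compat; auto|].
    assert ((1 + g) * (1 + g) <= 4) by (destruct Hg; nra). nra. }
  assert (g * (L1 * L2) <= eps / 2) by (destruct Hg; nra).
  lra.
Qed.

Lemma hshear_box_cover g K b eps : 0 <= K -> lipschitz1 K g -> 0 < eps ->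
  exists l, (forall p, in_box2 b p -> exists b', In b' l /\ in_box2 b' (hshear g p)) /\
    lsum vol_box2 l <= vol_box2 b + eps.
Proof.
  intros HK Hg He. destruct b as [[a1 b1] [a2 b2]].
  destruct (Rlt_dec a1 b1) as [H1|H1]; [destruct (Rlt_dec a2 b2) as [H2|H2]|];
  try (exists nil; split; [intros [x y] Hp; unfold in_box2 in Hp; simpl in Hp; lra|
     change (lsum vol_box2 nil) with 0; pose proof (vol_box2_ge0 ((a1, b1), (a2, b2))); lra]).
  destruct (exists_small_ratio ((b1 - a1) * (b2 - a2)) (eps / 2)) as [g0 [Hg0 Hg2]];
    [apply Rmult_le_pos; lra|lra|].
  destruct (exists_nat_div_lt (4 * (K * (b2 - a2) * (b2 - a2))) (eps / 2)) as [k [Hk Hk2]]; [lra|].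
  destruct (interval_subdivision a2 b2 k g0 H2 Hk (proj1 Hg0)) as [l2 [Hl2a [Hl2b Hl2c]]].
  set (h := (b2 - a2) * (1 + g0) / INR k).
  assert (Hk0 : 0 < INR k) by (apply lt_0_INR; lia).
  assert (Hh : 0 < h) by (unfold h; apply Rdiv_lt_0_compat; nra).
  exists (map (fun J => ((a1 + g (imid J) - K * h / 2, b1 + g (imid J) + K * h / 2), J)) l2).
  split.
  - intros [x y] Hp. unfold in_box2 in Hp; simpl in Hp. destruct Hp as [Hx Hy].
    destruct (Hl2b y Hy) as [J [HJ HyJ]].
    eexists. split.
    + apply in_map_iff. exists J. split; [reflexivity|auto].
    + unfold hshear, in_box2; simpl. pose proof (Hl2c J HJ) as E. unfold ilen in E. fold h in E.
      specialize (Hg y (imid J)). unfold imid in *.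
      assert (Rabs (y - (fst J + snd J) / 2) <= h / 2) by (apply Rabs_le; lra).
      assert (Hgd : Rabs (g y - g ((fst J + snd J) / 2)) <= K * h / 2).
      { eapply Rle_trans; [apply Hg|]. nra. }
      apply Rabs_le_between in Hgd. repeat split; lra.
  - rewrite lsum_map, (lsum_const _ l2 (((b1 - a1) + K * h) * h)).
    2:{ intros J HJ. unfold vol_box2; simpl. pose proof (Hl2c J HJ) as E. unfold ilen in E. fold h in E.
        rewrite E, !Rmax_0_ge0 by nra. field. }
    rewrite Hl2a. unfold vol_box2; simpl. rewrite !Rmax_0_ge0 by lra.
    apply hshear_cover_volume_le; auto; lra.
Qed.

Lemma vol2_hshear_le g K Y : 0 <= K -> lipschitz1 K g -> coverable2 Y -> coverable2 (img (hshear g) Y) /\ vol2 (img (hshear g) Y) <= vol2 Y.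
Proof.
  intros HK Hg HY. replace (vol2 Y) with (1 * vol2 Y) by ring.
  apply (omeas_image_le in_box2 vol_box2 vol_box2_ge0 empty_box2 vol_box2_empty); auto; [lra|].
  intros b eps He. destruct (hshear_box_cover g K b eps HK Hg He) as [l [Hl1 Hl2]].
  exists l. split; [intros p Hp _; auto|lra].
Qed.

Lemma vol2_hshear g K Y : 0 <= K -> lipschitz1 K g -> coverable2 Y -> coverable2 (img (hshear g) Y) /\ vol2 (img (hshear g) Y) = vol2 Y.
Proof.
  intros HK Hg HY. replace (vol2 Y) with (1 * vol2 Y) by ring.
  apply (omeas_image_eq in_box2 vol_box2 _ (hshear (fun x => - g x)) 1 1); auto; try lra.
  - intros Z HZ. rewrite Rmult_1_l. apply (vol2_hshear_le g K); auto.
  - intros Z HZ. rewrite Rmult_1_l. apply (vol2_hshear_le _ K); auto.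
    intros x y. replace (- g x - - g y) with (- (g x - g y)) by ring. rewrite Rabs_Ropp. apply Hg.
  - intros [x y]. unfold hshear; simpl. f_equal. ring.
Qed.

Lemma rot_rot a b p : rot a (rot b p) = rot (a + b) p.
Proof. unfold rot; simpl. rewrite cos_plus, sin_plus. f_equal; ring. Qed.

Lemma rot_0 p : rot 0 p = p.
Proof. unfold rot. rewrite cos_0, sin_0. destruct p; simpl; f_equal; ring. Qed.

Lemma rot_PI p : rot PI p = (- fst p, - snd p).
Proof. unfold rot. rewrite cos_PI, sin_PI. f_equal; ring. Qed.

Lemma rot_as_shears th p : sin th <> 0 ->
  (rot th (fst p), snd p) =
  shear1 (fun y => - ((1 - cos th) / sin th) * y) (shear2 (fun x => sin th * x) (shear1 (fun y => - ((1 - cos th) / sin th) * y) p)).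
Proof.
  intros Hs. destruct p as [[x y] t]. unfold rot, shear1, shear2; simpl.
  pose proof (sin2_cos2 th) as Hsc. unfold Rsqr in Hsc.
  set (u := - ((1 - cos th) / sin th)).
  assert (Hus : u * sin th = cos th - 1) by (unfold u; field; auto).
  assert (Hu1 : u * (1 + cos th) = - sin th).
  { unfold u. apply Rmult_eq_reg_r with (sin th); auto.
    replace (- ((1 - cos th) / sin th) * (1 + cos th) * sin th) with (- (1 - cos th * cos th)) by (field; auto).
    lra. }
  f_equal. f_equal.
  - replace (x + u * y + u * (y + sin th * (x + u * y))) with (x * (1 + u * sin th) + y * (u * (2 + u * sin th))) by ring.
    rewrite Hus. replace (u * (2 + (cos th - 1))) with (u * (1 + cos th)) by ring. rewrite Hu1. ring.
  - replace (y + sin th * (x + u * y)) with (sin th * x + y * (1 + u * sin th)) by ring. rewrite Hus. ring.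
Qed.

Lemma vol3_rot th Y : sin th <> 0 -> coverable3 Y ->
  coverable3 (img (fun p : pt3 => (rot th (fst p), snd p)) Y) /\ vol3 (img (fun p : pt3 => (rot th (fst p), snd p)) Y) = vol3 Y.
Proof.
  intros Hs HY. set (u := - ((1 - cos th) / sin th)).
  rewrite (img_ext _ (fun p => shear1 (fun y => u * y) (shear2 (fun x => sin th * x) (shear1 (fun y => u * y) p)))).
  2:{ intros p _. apply rot_as_shears; auto. }
  assert (Ei : img (fun p => shear1 (fun y => u * y) (shear2 (fun x => sin th * x) (shear1 (fun y => u * y) p))) Y =
     img (shear1 (fun y => u * y)) (img (shear2 (fun x => sin th * x)) (img (shear1 (fun y => u * y)) Y))).
  { rewrite !img_comp. reflexivity. }
  rewrite Ei.
  destruct (vol3_shear1 (fun y => u * y) (Rabs u) Y (Rabs_pos u) (lipschitz1_linear u) HY) as [F1 E1].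
  destruct (vol3_shear2 (fun x => sin th * x) (Rabs (sin th)) _ (Rabs_pos _) (lipschitz1_linear _) F1) as [F2 E2].
  destruct (vol3_shear1 (fun y => u * y) (Rabs u) _ (Rabs_pos u) (lipschitz1_linear u) F2) as [F3 E3].
  split; auto. lra.
Qed.

Lemma vol3_neg Y : coverable3 Y ->
  coverable3 (img (fun p : pt3 => ((- fst (fst p), - snd (fst p)), snd p)) Y) /\
  vol3 (img (fun p : pt3 => ((- fst (fst p), - snd (fst p)), snd p)) Y) = vol3 Y.
Proof.
  intros HY. rewrite (img_ext _ (scale3 (-1) (-1) 1)).
  2:{ intros [[x y] t] _. unfold scale3; simpl. f_equal; [f_equal|]; ring. }
  destruct (vol3_scale3 (-1) (-1) 1 Y) as [F E]; try lra; auto. split; auto. rewrite E.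
  assert (Hm : Rabs (-1) = 1) by (unfold Rabs; destruct (Rcase_abs (-1)); lra). rewrite Hm, Rabs_R1. ring.
Qed.

(** * Volume of subgraphs *)

(* [sgvol E f] plays the role of [\int_E f], as [moment0] does for [f = nrm2]. *)
Definition subgraph (E : region) (f : pt2 -> R) : pt3 -> Prop := fun p => E (fst p) /\ 0 < snd p < f (fst p).

Definition sgvol E f := vol3 (subgraph E f).

Definition in_square (R0 : R) (E : region) := forall p, E p -> Rabs (fst p) <= R0 /\ Rabs (snd p) <= R0.

Definition lipschitz_on (R0 K : R) (f : pt2 -> R) := forall x y,
  Rabs (fst x) <= R0 -> Rabs (snd x) <= R0 -> Rabs (fst y) <= R0 -> Rabs (snd y) <= R0 ->
  Rabs (f x - f y) <= K * (Rabs (fst x - fst y) + Rabs (snd x - snd y)).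

Definition slab (E : region) a b : pt3 -> Prop := fun p => E (fst p) /\ a < snd p < b.

Lemma vol3_slab_le R0 E a b : 0 <= R0 -> a <= b -> in_square R0 E ->
  coverable3 (slab E a b) /\ vol3 (slab E a b) <= (2 * R0 + 2) * (2 * R0 + 2) * (b - a).
Proof.
  intros HR Hab HE. destruct (omeas_box_le in_box3 vol_box3 vol_box3_ge0 empty_box3 vol_box3_empty (slab E a b)
    (((- R0 - 1, R0 + 1), (- R0 - 1, R0 + 1)), (a, b))) as [H1 H2].
  - unfold slab. intros [[x y] t] [Ep Ht]. simpl in *. destruct (HE _ Ep) as [Hx Hy]. simpl in Hx, Hy.
    apply Rabs_le_between in Hx; apply Rabs_le_between in Hy. repeat split; lra.
  - split; auto. unfold vol_box3 in H2; simpl in H2. rewrite !Rmax_0_ge0 in H2 by lra.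
    unfold vol3. replace (R0 + 1 - (- R0 - 1)) with (2 * R0 + 2) in H2 by ring. auto.
Qed.

Lemma coverable3_subgraph R0 E f C : 0 <= R0 -> 0 <= C -> in_square R0 E -> (forall p, E p -> f p <= C) -> coverable3 (subgraph E f).
Proof.
  intros HR HC HE Hf. destruct (vol3_slab_le R0 E 0 (C + 1) HR ltac:(lra) HE) as [H1 _].
  apply (omeas_mono in_box3 vol_box3 vol_box3_ge0 (subgraph E f) (slab E 0 (C + 1))); auto.
  unfold subgraph, slab; intros p [Ep Ht]; split; auto; specialize (Hf _ Ep); lra.
Qed.

Definition clamp (R0 x : R) := Rmax (- R0) (Rmin R0 x).

Definition clamp_fun R0 (f : pt2 -> R) : pt2 -> R := fun p => f (clamp R0 (fst p), clamp R0 (snd p)).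

Lemma clamp_bound R0 x : 0 <= R0 -> Rabs (clamp R0 x) <= R0.
Proof. intros H. apply Rabs_le. unfold clamp, Rmin. destruct (Rle_dec R0 x); unfold Rmax;
  repeat match goal with |- context [Rle_dec ?a ?b] => destruct (Rle_dec a b) end; lra. Qed.

Lemma clamp_id R0 x : Rabs x <= R0 -> clamp R0 x = x.
Proof. intros H. apply Rabs_le_between in H. unfold clamp, Rmin. destruct (Rle_dec R0 x); unfold Rmax;
  repeat match goal with |- context [Rle_dec ?a ?b] => destruct (Rle_dec a b) end; lra. Qed.

Lemma clamp_lipschitz R0 x y : Rabs (clamp R0 x - clamp R0 y) <= Rabs (x - y).
Proof. unfold clamp, Rmin.
  destruct (Rle_dec R0 x), (Rle_dec R0 y); unfold Rmax;
  repeat match goal with |- context [Rle_dec ?a ?b] => destruct (Rle_dec a b) end;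
  unfold Rabs; repeat match goal with |- context [Rcase_abs ?a] => destruct (Rcase_abs a) end; lra.
Qed.

Lemma clamp_fun_lipschitz R0 K f : 0 <= R0 -> 0 <= K -> lipschitz_on R0 K f -> lipschitz2 K (clamp_fun R0 f).
Proof.
  intros HR HK Hf x y. unfold clamp_fun. eapply Rle_trans; [apply Hf; apply clamp_bound; auto|].
  simpl. apply Rmult_le_compat_l; auto. pose proof (clamp_lipschitz R0 (fst x) (fst y)). pose proof (clamp_lipschitz R0 (snd x) (snd y)). lra.
Qed.

Lemma clamp_fun_id R0 f p : Rabs (fst p) <= R0 -> Rabs (snd p) <= R0 -> clamp_fun R0 f p = f p.
Proof. intros H1 H2. unfold clamp_fun. rewrite !clamp_id by auto. destruct p; auto. Qed.

Lemma lipschitz_on_ub R0 K f p : 0 <= R0 -> 0 <= K -> lipschitz_on R0 K f -> Rabs (fst p) <= R0 -> Rabs (snd p) <= R0 ->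
  f p <= Rabs (f (0, 0)) + K * (2 * R0).
Proof.
  intros HR HK0 Hf H1 H2. assert (HK : Rabs (f p - f (0, 0)) <= K * (Rabs (fst p - 0) + Rabs (snd p - 0))).
  { apply Hf; simpl; auto; rewrite Rabs_R0; auto. }
  rewrite !Rminus_0_r in HK. apply Rabs_le_between in HK. pose proof (Rle_abs (f (0, 0))).
  assert (K * (Rabs (fst p) + Rabs (snd p)) <= K * (2 * R0)) by (apply Rmult_le_compat_l; lra). lra.
Qed.

Section SubgraphAdditivity.
Variables (R0 K : R) (E : region) (f g : pt2 -> R).
Hypothesis HR : 0 <= R0.
Hypothesis HK : 0 <= K.
Hypothesis HE : in_square R0 E.
Hypothesis Hf : lipschitz_on R0 K f.
Hypothesis Hg : lipschitz_on R0 K g.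

Let A0 := (2 * R0 + 2) * (2 * R0 + 2).

Let A0_ge0 : 0 <= A0.
Proof. unfold A0; nra. Qed.

Let bounded_on_E h : lipschitz_on R0 K h -> forall p, E p -> h p <= Rabs (h (0, 0)) + K * (2 * R0).
Proof. intros Hh p Ep. destruct (HE p Ep). apply lipschitz_on_ub; auto. Qed.

Let bound_ge0 h : 0 <= Rabs (h (0, 0)) + K * (2 * R0).
Proof. pose proof (Rabs_pos (h (0, 0))). nra. Qed.

Let coverable_f : coverable3 (subgraph E f).
Proof. apply (coverable3_subgraph R0 E f _ HR (bound_ge0 f)); auto. Qed.

Let coverable_g : coverable3 (subgraph E g).
Proof. apply (coverable3_subgraph R0 E g _ HR (bound_ge0 g)); auto. Qed.

(* [f] is extended off the square so that its vertical shift is globally Lipschitz. *)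
Let shift_f := vshift (clamp_fun R0 f).

Let lipschitz2_clamp_f : lipschitz2 K (clamp_fun R0 f).
Proof. apply clamp_fun_lipschitz; auto. Qed.

Let clamp_f_on_E p : E p -> clamp_fun R0 f p = f p.
Proof. intros Ep; destruct (HE p Ep); apply clamp_fun_id; auto. Qed.

(* Above the graph of [f], the subgraph of [f + g] is the shift by [f] of the subgraph of
   [g] thickened downwards by a thin slab. *)
Lemma sgvol_add_le : sgvol E (fun p => f p + g p) <= sgvol E f + sgvol E g.
Proof.
  apply le_epsilon. intros z0 Hz0. set (z := z0 / (2 * A0 + 1)).
  assert (Hz : 0 < z) by (unfold z; apply Rdiv_lt_0_compat; lra).
  assert (Hzz : A0 * (z - - z) <= z0).
  { replace (A0 * (z - - z)) with (2 * A0 * (z0 / (2 * A0 + 1))) by (unfold z; ring).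
    apply mul_div_succ_le; lra. }
  set (Z := fun p : pt3 => E (fst p) /\ - z < snd p < g (fst p)).
  destruct (vol3_slab_le R0 E (- z) z HR ltac:(lra) HE) as [FS MS].
  destruct (omeas_union_le in_box3 vol_box3 vol_box3_ge0 empty_box3 vol_box3_empty Z (subgraph E g) (slab E (- z) z)
    coverable_g FS) as [FZ MZ].
  { unfold Z, subgraph, slab. intros p [Ep Hp].
    destruct (Rlt_dec 0 (snd p)); [left; split; auto; split; lra|right; split; auto; split; lra]. }
  destruct (vol3_vshift_le _ K Z HK lipschitz2_clamp_f FZ) as [FI MI].
  destruct (omeas_union_le in_box3 vol_box3 vol_box3_ge0 empty_box3 vol_box3_empty
    (subgraph E (fun p => f p + g p)) (subgraph E f) (img shift_f Z) coverable_f FI) as [_ Hle].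
  { unfold subgraph at 1. intros [x t] [Ex Ht]. simpl in *.
    destruct (Rlt_dec t (f x)); [left; split; auto; simpl; split; auto; lra|right].
    exists (x, t - f x). split; [unfold Z; split; simpl; auto; split; lra|].
    unfold shift_f, vshift; simpl. rewrite clamp_f_on_E by auto. f_equal; ring. }
  unfold sgvol, vol3, shift_f in *. fold A0 in MS. lra.
Qed.

Hypothesis Hf0 : forall p, E p -> 0 <= f p.
Hypothesis Hg0 : forall p, E p -> 0 <= g p.

Let below_cut eta (p : pt3) : Prop := E (fst p) /\ 0 < snd p < f (fst p) - eta.
Let above_cut eta (p : pt3) : Prop := E (fst p) /\ f (fst p) + eta < snd p < f (fst p) + g (fst p).

Let cuts_separated eta : 0 < eta ->
  forall p q, below_cut eta p -> above_cut eta q -> ~ close3 (2 * eta / (2 * K + 1)) p q.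
Proof.
  intros He [x t] [y s] [Ex Ht] [Ey Hs] [H1 [H2 H3]]. simpl in *. set (r := 2 * eta / (2 * K + 1)) in *.
  destruct (HE x Ex) as [Hx1 Hx2]. destruct (HE y Ey) as [Hy1 Hy2].
  specialize (Hf x y Hx1 Hx2 Hy1 Hy2).
  assert (K * (Rabs (fst x - fst y) + Rabs (snd x - snd y)) <= K * (2 * r)) by (apply Rmult_le_compat_l; lra).
  apply Rabs_le_between in Hf. apply Rabs_lt_between in H3.
  assert (r * (2 * K + 1) = 2 * eta) by (unfold r; field; lra). nra.
Qed.

(* Cutting the subgraph of [f + g] at heights [f - eta] and [f + eta] leaves two separated
   pieces: the subgraph of [f] and the [f]-shifted subgraph of [g], each up to a thin slab. *)
Lemma sgvol_add_ge : sgvol E f + sgvol E g <= sgvol E (fun p => f p + g p).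
Proof.
  apply le_epsilon. intros eta0 He0. set (eta := eta0 / (6 * A0 + 1)).
  assert (He : 0 < eta) by (unfold eta; apply Rdiv_lt_0_compat; lra).
  assert (Hee : A0 * (eta - - 2 * eta) + A0 * (2 * eta - - eta) <= eta0).
  { replace (A0 * (eta - - 2 * eta) + A0 * (2 * eta - - eta)) with (6 * A0 * (eta0 / (6 * A0 + 1))) by (unfold eta; ring).
    apply mul_div_succ_le; lra. }
  set (r := 2 * eta / (2 * K + 1)).
  assert (Hr : 0 < r) by (unfold r; apply Rdiv_lt_0_compat; lra).
  set (A := below_cut eta). set (B := above_cut eta).
  assert (Ffg : coverable3 (subgraph E (fun p => f p + g p))).
  { apply (coverable3_subgraph R0 E _ _ HR (Rplus_le_le_0_compat _ _ (bound_ge0 f) (bound_ge0 g))); auto.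
    intros p Ep. pose proof (bounded_on_E f Hf p Ep). pose proof (bounded_on_E g Hg p Ep). lra. }
  destruct (omeas_mono in_box3 vol_box3 vol_box3_ge0 (fun p => A p \/ B p) (subgraph E (fun p => f p + g p)))
    as [FAB MAB]; auto.
  { unfold A, B, below_cut, above_cut, subgraph. intros p [[Ep Hp]|[Ep Hp]]; split; auto; specialize (Hf0 _ Ep); specialize (Hg0 _ Ep); lra. }
  destruct (vol3_separated_ge A B r Hr) as [FA [FB MS]]; auto.
  { apply cuts_separated; auto. }
  destruct (vol3_slab_le R0 E (- 2 * eta) eta HR ltac:(lra) HE) as [FS2 MS2].
  destruct (vol3_vshift_le _ K _ HK lipschitz2_clamp_f FS2) as [FI2 MI2].
  destruct (omeas_union_le in_box3 vol_box3 vol_box3_ge0 empty_box3 vol_box3_empty (subgraph E f) A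
    (img shift_f (slab E (- 2 * eta) eta)) FA FI2) as [_ Hf1].
  { unfold subgraph. intros [x t] [Ex Ht]. simpl in *.
    destruct (Rlt_dec t (f x - eta)); [left; unfold A, below_cut; split; auto; simpl; split; lra|right].
    exists (x, t - f x). split; [unfold slab; split; simpl; auto; split; lra|].
    unfold shift_f, vshift; simpl. rewrite clamp_f_on_E by auto. f_equal; ring. }
  assert (LF' : lipschitz2 K (fun p => - clamp_fun R0 f p)).
  { intros x y. replace (- clamp_fun R0 f x - - clamp_fun R0 f y) with (- (clamp_fun R0 f x - clamp_fun R0 f y)) by ring.
    rewrite Rabs_Ropp; apply lipschitz2_clamp_f. }
  destruct (vol3_slab_le R0 E (- eta) (2 * eta) HR ltac:(lra) HE) as [FS3 MS3].
  destruct (vol3_vshift_le _ K B HK LF' FB) as [FI3 MI3].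
  destruct (omeas_union_le in_box3 vol_box3 vol_box3_ge0 empty_box3 vol_box3_empty (subgraph E g)
    (img (vshift (fun p => - clamp_fun R0 f p)) B) (slab E (- eta) (2 * eta)) FI3 FS3) as [_ Hg1].
  { unfold subgraph. intros [x t] [Ex Ht]. simpl in *.
    destruct (Rlt_dec eta t); [left|right; unfold slab; split; auto; simpl; split; lra].
    exists (x, t + f x). split; [unfold B, above_cut; split; simpl; auto; split; lra|].
    unfold vshift; simpl. rewrite clamp_f_on_E by auto. f_equal; ring. }
  unfold sgvol, vol3, shift_f in *. fold A0 in MS2, MS3. lra.
Qed.

Lemma sgvol_add : sgvol E (fun p => f p + g p) = sgvol E f + sgvol E g.
Proof. apply Rle_antisym; [apply sgvol_add_le|apply sgvol_add_ge]. Qed.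

End SubgraphAdditivity.

Lemma sgvol_ext E f g : (forall x, E x -> f x = g x) -> sgvol E f = sgvol E g.
Proof. intros H. unfold sgvol. f_equal. apply pred_ext. intros [x t]. unfold subgraph; simpl.
  split; intros [Ex Ht]; split; auto; [rewrite <- H|rewrite H]; auto. Qed.

Lemma sgvol_zero E : sgvol E (fun _ => 0) = 0.
Proof.
  unfold sgvol. assert (subgraph E (fun _ => 0) = (fun _ => False)).
  { apply pred_ext. intros p; unfold subgraph; split; [intros [_ H]; lra|intros []]. }
  rewrite H. destruct (omeas_empty in_box3 vol_box3 vol_box3_ge0 empty_box3 vol_box3_empty) as [H1 H2].
  pose proof (omeas_ge0 in_box3 vol_box3 vol_box3_ge0 _ H1). unfold vol3. lra.
Qed.

Lemma sgvol_scale E f c : 0 < c -> coverable3 (subgraph E f) -> sgvol E (fun x => c * f x) = c * sgvol E f.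
Proof.
  intros Hc HF. unfold sgvol.
  assert (subgraph E (fun x => c * f x) = img (scale3 1 1 c) (subgraph E f)).
  { apply pred_ext. intros [[x y] t]. unfold subgraph, img, scale3; simpl. split.
    - intros [Ex Ht]. exists ((x, y), t / c). simpl. split; [split; auto|].
      + split; [apply Rdiv_lt_0_compat; lra|]. apply Rmult_lt_reg_l with c; auto.
        unfold Rdiv. replace (c * (t * / c)) with t by (field; lra). lra.
      + f_equal; [f_equal; ring|field; lra].
    - intros [[[x' y'] t'] [[Ex Ht] Heq]]. simpl in *. inversion Heq; subst.
      rewrite !Rmult_1_l. split; auto. split; [nra|]. apply Rmult_lt_compat_l; lra. }
  rewrite H. destruct (vol3_scale3 1 1 c (subgraph E f)) as [_ E1]; try lra; auto.
  rewrite E1. rewrite Rabs_R1, Rabs_right by lra. ring.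
Qed.

Lemma sgvol_comp_invariant E f L Li : (forall p, E p <-> E (L p)) -> (forall y, L (Li y) = y) ->
  (forall Y, coverable3 Y -> coverable3 (img (fun p : pt3 => (L (fst p), snd p)) Y) /\
     vol3 (img (fun p : pt3 => (L (fst p), snd p)) Y) = vol3 Y) ->
  coverable3 (subgraph E (fun p => f (L p))) -> sgvol E (fun p => f (L p)) = sgvol E f.
Proof.
  intros HE HL Hm HF. unfold sgvol.
  assert (subgraph E f = img (fun p : pt3 => (L (fst p), snd p)) (subgraph E (fun p => f (L p)))).
  { apply pred_ext. intros [y t]. unfold subgraph, img; simpl. split.
    - intros [Ey Ht]. exists (Li y, t). simpl. split; [split|].
      + apply HE. rewrite HL; auto.
      + rewrite HL; auto.
      + rewrite HL; auto.
    - intros [[x t'] [[Ex Ht] Heq]]. simpl in *. inversion Heq; subst. exact (conj (proj1 (HE x) Ex) Ht). }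
  rewrite H. symmetry. apply Hm; auto.
Qed.

Definition bounded_on (R0 U : R) (f : pt2 -> R) := forall x, Rabs (fst x) <= R0 -> Rabs (snd x) <= R0 -> Rabs (f x) <= U.

Definition lip_bnd R0 K U f := 0 <= K /\ 0 <= U /\ lipschitz_on R0 K f /\ bounded_on R0 U f.

Lemma dist1_ge0 (x y : pt2) : 0 <= Rabs (fst x - fst y) + Rabs (snd x - snd y).
Proof. pose proof (Rabs_pos (fst x - fst y)); pose proof (Rabs_pos (snd x - snd y)); lra. Qed.

Lemma lipschitz_on_mono R0 K K' f : K <= K' -> lipschitz_on R0 K f -> lipschitz_on R0 K' f.
Proof. intros HK Hf x y H1 H2 H3 H4. eapply Rle_trans; [apply Hf; auto|].
  apply Rmult_le_compat_r; auto. apply dist1_ge0. Qed.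

Lemma lip_bnd_add R0 K1 U1 f K2 U2 g : lip_bnd R0 K1 U1 f -> lip_bnd R0 K2 U2 g -> lip_bnd R0 (K1 + K2) (U1 + U2) (fun p => f p + g p).
Proof.
  intros [Hk1 [Hu1 [Hf Bf]]] [Hk2 [Hu2 [Hg Bg]]]. split; [lra|split; [lra|split]].
  - intros x y H1 H2 H3 H4. specialize (Hf x y H1 H2 H3 H4). specialize (Hg x y H1 H2 H3 H4).
    replace (f x + g x - (f y + g y)) with ((f x - f y) + (g x - g y)) by ring.
    eapply Rle_trans; [apply Rabs_triang|]. lra.
  - intros x H1 H2. specialize (Bf x H1 H2). specialize (Bg x H1 H2).
    eapply Rle_trans; [apply Rabs_triang|]. lra.
Qed.

Lemma lip_bnd_scal R0 K U f c : lip_bnd R0 K U f -> lip_bnd R0 (Rabs c * K) (Rabs c * U) (fun p => c * f p).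
Proof.
  intros [Hk [Hu [Hf Bf]]]. pose proof (Rabs_pos c). split; [nra|split; [nra|split]].
  - intros x y H1 H2 H3 H4. rewrite <- Rmult_minus_distr_l, Rabs_mult, Rmult_assoc.
    apply Rmult_le_compat_l; auto.
  - intros x H1 H2. rewrite Rabs_mult. apply Rmult_le_compat_l; auto.
Qed.

Lemma lip_bnd_mul R0 K1 U1 f K2 U2 g : lip_bnd R0 K1 U1 f -> lip_bnd R0 K2 U2 g ->
  lip_bnd R0 (U1 * K2 + U2 * K1) (U1 * U2) (fun p => f p * g p).
Proof.
  intros [Hk1 [Hu1 [Hf Bf]]] [Hk2 [Hu2 [Hg Bg]]]. split; [nra|split; [nra|split]].
  - intros x y H1 H2 H3 H4. specialize (Hf x y H1 H2 H3 H4). specialize (Hg x y H1 H2 H3 H4).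
    pose proof (Bf x H1 H2). pose proof (Bg y H3 H4). pose proof (dist1_ge0 x y).
    replace (f x * g x - f y * g y) with (f x * (g x - g y) + g y * (f x - f y)) by ring.
    eapply Rle_trans; [apply Rabs_triang|]. rewrite !Rabs_mult.
    assert (Rabs (f x) * Rabs (g x - g y) <= U1 * (K2 * (Rabs (fst x - fst y) + Rabs (snd x - snd y)))).
    { apply Rmult_le_compat; auto; apply Rabs_pos. }
    assert (Rabs (g y) * Rabs (f x - f y) <= U2 * (K1 * (Rabs (fst x - fst y) + Rabs (snd x - snd y)))).
    { apply Rmult_le_compat; auto; apply Rabs_pos. }
    nra.
  - intros x H1 H2. rewrite Rabs_mult. apply Rmult_le_compat; auto; apply Rabs_pos.
Qed.

Lemma lip_bnd_fst R0 : 0 <= R0 -> lip_bnd R0 1 R0 fst.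
Proof. intros H. split; [lra|split; [lra|split]].
  - intros x y _ _ _ _. pose proof (Rabs_pos (snd x - snd y)). lra.
  - intros x H1 _. auto. Qed.

Lemma lip_bnd_snd R0 : 0 <= R0 -> lip_bnd R0 1 R0 snd.
Proof. intros H. split; [lra|split; [lra|split]].
  - intros x y _ _ _ _. pose proof (Rabs_pos (fst x - fst y)). lra.
  - intros x _ H2. auto. Qed.

Lemma lip_bnd_of_lipschitz1 R0 K g : 0 <= R0 -> 0 <= K -> lipschitz1 K g -> g 0 = 0 -> lip_bnd R0 K (K * R0) (fun p => g (snd p)).
Proof.
  intros HR HK Hg H0. split; [auto|split; [nra|split]].
  - intros x y _ _ _ _. eapply Rle_trans; [apply Hg|]. apply Rmult_le_compat_l; auto.
    pose proof (Rabs_pos (fst x - fst y)). lra.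
  - intros x _ H2. specialize (Hg (snd x) 0). rewrite H0, !Rminus_0_r in Hg.
    eapply Rle_trans; [apply Hg|]. apply Rmult_le_compat_l; auto.
Qed.

Lemma Rabs_rot_fst_le (c s u v : R) : Rabs c <= 1 -> Rabs s <= 1 -> Rabs (c * u - s * v) <= Rabs u + Rabs v.
Proof. intros Hc Hs. eapply Rle_trans; [apply Rabs_triang|]. rewrite Rabs_Ropp, !Rabs_mult.
  pose proof (Rabs_pos u); pose proof (Rabs_pos v); pose proof (Rabs_pos c); pose proof (Rabs_pos s). nra. Qed.

Lemma Rabs_rot_snd_le (c s u v : R) : Rabs c <= 1 -> Rabs s <= 1 -> Rabs (s * u + c * v) <= Rabs u + Rabs v.
Proof. intros Hc Hs. eapply Rle_trans; [apply Rabs_triang|]. rewrite !Rabs_mult.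
  pose proof (Rabs_pos u); pose proof (Rabs_pos v); pose proof (Rabs_pos c); pose proof (Rabs_pos s). nra. Qed.

Lemma Rabs_cos_le1 x : Rabs (cos x) <= 1.
Proof. apply Rabs_le. pose proof (COS_bound x). lra. Qed.

Lemma Rabs_sin_le1 x : Rabs (sin x) <= 1.
Proof. apply Rabs_le. pose proof (SIN_bound x). lra. Qed.

Lemma lip_bnd_rot R0 K U f phi : 0 <= R0 -> lip_bnd (2 * R0) K U f -> lip_bnd R0 (2 * K) U (fun p => f (rot phi p)).
Proof.
  intros HR [Hk [Hu [Hf Bf]]]. split; [lra|split; [lra|split]].
  - intros x y H1 H2 H3 H4. unfold rot.
    eapply Rle_trans; [apply Hf; simpl|];
      try (eapply Rle_trans; [apply Rabs_rot_fst_le || apply Rabs_rot_snd_le; auto using Rabs_cos_le1, Rabs_sin_le1|lra]).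
    simpl.
    replace (cos phi * fst x - sin phi * snd x - (cos phi * fst y - sin phi * snd y)) with
      (cos phi * (fst x - fst y) - sin phi * (snd x - snd y)) by ring.
    replace (sin phi * fst x + cos phi * snd x - (sin phi * fst y + cos phi * snd y)) with
      (sin phi * (fst x - fst y) + cos phi * (snd x - snd y)) by ring.
    pose proof (Rabs_rot_fst_le (cos phi) (sin phi) (fst x - fst y) (snd x - snd y) (Rabs_cos_le1 _) (Rabs_sin_le1 _)).
    pose proof (Rabs_rot_snd_le (cos phi) (sin phi) (fst x - fst y) (snd x - snd y) (Rabs_cos_le1 _) (Rabs_sin_le1 _)).
    pose proof (dist1_ge0 x y). nra.
  - intros x H1 H2. unfold rot. apply Bf; simpl.
    + eapply Rle_trans; [apply Rabs_rot_fst_le; auto using Rabs_cos_le1, Rabs_sin_le1|lra].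
    + eapply Rle_trans; [apply Rabs_rot_snd_le; auto using Rabs_cos_le1, Rabs_sin_le1|lra].
Qed.

Lemma lip_bnd_neg R0 K U f : lip_bnd R0 K U f -> lip_bnd R0 K U (fun p => f (- fst p, - snd p)).
Proof.
  intros [Hk [Hu [Hf Bf]]]. split; [lra|split; [lra|split]].
  - intros x y H1 H2 H3 H4. eapply Rle_trans; [apply Hf; simpl; rewrite ?Rabs_Ropp; auto|].
    simpl. replace (- fst x - - fst y) with (- (fst x - fst y)) by ring.
    replace (- snd x - - snd y) with (- (snd x - snd y)) by ring. rewrite !Rabs_Ropp. lra.
  - intros x H1 H2. apply Bf; simpl; rewrite Rabs_Ropp; auto.
Qed.

Lemma lip_bnd_sumN R0 K U (F : nat -> pt2 -> R) n : 0 <= K -> 0 <= U -> (forall k, lip_bnd R0 K U (F k)) ->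
  lip_bnd R0 (INR n * K) (INR n * U) (fun x => sumN (fun k => F k x) n).
Proof.
  intros HK HU HF. induction n.
  - simpl. split; [lra|split; [lra|split]].
    + intros x y _ _ _ _. rewrite Rminus_0_r, Rabs_R0. pose proof (dist1_ge0 x y). lra.
    + intros x _ _. rewrite Rabs_R0. lra.
  - rewrite S_INR. replace ((INR n + 1) * K) with (INR n * K + K) by ring.
    replace ((INR n + 1) * U) with (INR n * U + U) by ring.
    apply (lip_bnd_add R0 _ _ (fun x => sumN (fun k => F k x) n) K U (F n)); auto.
Qed.

Lemma coverable3_subgraph_lip_bnd R0 K U D f : 0 <= R0 -> in_square R0 D -> lip_bnd R0 K U f -> coverable3 (subgraph D f).
Proof.
  intros HR HD [HK [HU [_ Hb]]]. apply (coverable3_subgraph R0 D f U); auto.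
  intros p Dp. destruct (HD p Dp). specialize (Hb p H H0). apply Rabs_le_between in Hb. lra.
Qed.

Lemma sgvol_sumN R0 K U E (F : nat -> pt2 -> R) n : 0 <= R0 -> 0 <= K -> 0 <= U -> in_square R0 E ->
  (forall k, lip_bnd R0 K U (F k)) -> (forall k x, E x -> 0 <= F k x) ->
  sgvol E (fun x => sumN (fun k => F k x) n) = sumN (fun k => sgvol E (F k)) n.
Proof.
  intros HR HK HU HE HF H0. induction n.
  - simpl. apply sgvol_zero.
  - change (sumN (fun k => sgvol E (F k)) (S n)) with (sumN (fun k => sgvol E (F k)) n + sgvol E (F n)).
    rewrite <- IHn.
    change (fun x => sumN (fun k => F k x) (S n)) with (fun x => sumN (fun k => F k x) n + F n x).
    destruct (lip_bnd_sumN R0 K U F n HK HU HF) as [_ [_ [Hl _]]].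
    destruct (HF n) as [_ [_ [Hl2 _]]].
    apply (sgvol_add R0 (INR n * K + K)); auto.
    + pose proof (pos_INR n). nra.
    + eapply lipschitz_on_mono; [|apply Hl]. lra.
    + eapply lipschitz_on_mono; [|apply Hl2]. pose proof (pos_INR n). nra.
    + intros p Ep. apply sumN_ge0. intros k. apply H0; auto.
Qed.

(** * Moment of inertia and area of a bounded domain *)

Lemma nrm2_ge0 p : 0 <= nrm2 p.
Proof. unfold nrm2. pose proof (pow2_ge_0 (fst p)). pose proof (pow2_ge_0 (snd p)). lra. Qed.

Lemma coverable2_in_square R0 D : in_square R0 D -> coverable2 D.
Proof.
  intros HD. destruct (omeas_box_le in_box2 vol_box2 vol_box2_ge0 empty_box2 vol_box2_empty D
    ((- R0 - 1, R0 + 1), (- R0 - 1, R0 + 1))) as [H _]; auto.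
  intros p Dp. destruct (HD p Dp) as [H1 H2]. apply Rabs_le_between in H1; apply Rabs_le_between in H2.
  unfold in_box2; simpl. lra.
Qed.

Lemma moment0_sgvol X : moment0 X = sgvol X nrm2.
Proof.
  unfold moment0, sgvol, vol3. change (volume3 (subgraph_nrm2 X)) with (omeas in_box3 vol_box3 (subgraph_nrm2 X)).
  apply omeas_ext. intros [[x y] t]. unfold subgraph; simpl. tauto.
Qed.

(* Each cover of [D] by rectangles lifts to a cover of the subgraph by boxes of height
   [2 R0^2 + 1]. *)
Lemma sgvol_nrm2_le_area R0 D : 0 <= R0 -> in_square R0 D ->
  coverable3 (subgraph D nrm2) /\ sgvol D nrm2 <= (2 * R0 * R0 + 1) * vol2 D.
Proof.
  intros HR HD. pose proof (coverable2_in_square R0 D HD) as HF. set (C := 2 * R0 * R0 + 1).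
  assert (HC : 0 < C) by (unfold C; nra).
  assert (Hb : forall s, cover_sum in_box2 vol_box2 D s -> coverable3 (subgraph D nrm2) /\ sgvol D nrm2 <= s * C).
  { intros s [c [Hc Hs]]. unfold sgvol.
    assert (Hs' : infinite_sum (fun n => vol_box3 ((fst (c n), snd (c n)), (0, C))) (s * C)).
    { apply (infinite_sum_ext (fun n => vol_box2 (c n) * C)); [|apply infinite_sum_scal_r; auto].
      intros n. unfold vol_box2, vol_box3; simpl. rewrite (Rmax_0_ge0 (C - 0)) by lra. ring. }
    destruct (omeas_cover_le in_box3 vol_box3 vol_box3_ge0 (subgraph D nrm2) (fun n => ((fst (c n), snd (c n)), (0, C))) (s * C)) as [H1 H2].
    - intros [[x y] t] [Ep Ht]. destruct (Hc (x, y) Ep) as [n Hn]. exists n. simpl in *.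
      unfold in_box2 in Hn. destruct (HD _ Ep) as [Hx Hy]. simpl in Hx, Hy.
      apply Rabs_le_between in Hx; apply Rabs_le_between in Hy. unfold nrm2 in Ht; simpl in Ht.
      assert (x * x <= R0 * R0) by nra. assert (y * y <= R0 * R0) by nra.
      simpl in Hn. rewrite !Rmult_1_r in Ht. repeat split; try lra. unfold C. nra.
    - intros n. apply (infinite_sum_ge_sumN _ _ n); [intros; apply vol_box3_ge0|auto].
    - split; auto. }
  destruct HF as [s0 Hs0]. destruct (Hb s0 Hs0) as [Hf _]. split; auto.
  assert (sgvol D nrm2 / C <= vol2 D).
  { unfold vol2. apply (omeas_ge in_box2 vol_box2 vol_box2_ge0); [exact (ex_intro _ s0 Hs0)|]. intros s Hs.
    destruct (Hb s Hs) as [_ H]. apply Rmult_le_reg_r with C; auto. unfold Rdiv.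
    rewrite Rmult_assoc, Rinv_l by lra. lra. }
  fold C. replace (sgvol D nrm2) with (C * (sgvol D nrm2 / C)) by (field; lra).
  apply Rmult_le_compat_l; lra.
Qed.

(* An open set contains a small square away from the origin, on which [nrm2] is bounded
   below. *)
Lemma sgvol_nrm2_pos D : (exists p, D p) -> is_open2 D -> coverable3 (subgraph D nrm2) -> 0 < sgvol D nrm2.
Proof.
  intros [p0 Hp0] Ho HF. destruct (Ho p0 Hp0) as [eps [He Heps]].
  set (r := eps / 4). assert (Hr : 0 < r) by (unfold r; lra).
  set (s := if Rle_dec 0 (fst p0) then 2 * r else - (2 * r)).
  set (x0 := fst p0 + s).
  assert (Hx0 : forall x, x0 - r / 2 <= x <= x0 + r / 2 -> 3 / 2 * r <= Rabs x /\ Rabs (x - fst p0) <= 5 / 2 * r).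
  { intros x Hx. unfold x0, s in Hx. destruct (Rle_dec 0 (fst p0)).
    - split; [rewrite Rabs_right by lra; lra|apply Rabs_le; lra].
    - split; [rewrite Rabs_left by lra; lra|apply Rabs_le; lra]. }
  assert (H : r * r * (r * r / 4 - r * r / 8) <= sgvol D nrm2).
  { replace (r * r * (r * r / 4 - r * r / 8))
      with ((x0 + r / 2 - (x0 - r / 2)) * (snd p0 + r / 2 - (snd p0 - r / 2)) * (r * r / 4 - r * r / 8)) by field.
    apply vol3_ge_cbox3; [lra|lra|nra| |exact HF].
    intros x y z Hx Hy Hz. destruct (Hx0 x Hx) as [Ha Hb]. unfold subgraph; simpl. split.
    - apply Heps. cbn [fst snd]. apply Rabs_le_between in Hb.
      assert ((x - fst p0) ^ 2 <= (5 / 2 * r) ^ 2) by (simpl; nra).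
      assert ((y - snd p0) ^ 2 <= (r / 2) ^ 2) by (simpl; nra).
      assert (H3 : eps ^ 2 = 16 * r ^ 2) by (unfold r; field).
      assert (0 < r ^ 2) by (apply pow_lt; auto).
      assert ((5/2*r)^2 = 25/4 * r^2) by field. assert ((r/2)^2 = 1/4 * r^2) by field.
      rewrite H3. lra.
    - unfold nrm2; simpl. split; [nra|].
      assert (x * x >= 9 / 4 * (r * r)).
      { assert (Rabs x * Rabs x >= 3/2 * r * (3/2 * r)) by nra. rewrite <- Rabs_mult in H.
        rewrite Rabs_right in H by nra. nra. }
      nra. }
  assert (0 < r * r * (r * r / 4 - r * r / 8)).
  { assert (0 < r * r) by nra. nra. }
  lra.
Qed.

Lemma moment_area_pos R0 D : 0 <= R0 -> in_square R0 D -> is_open2 D -> (exists p, D p) ->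
  0 < sgvol D nrm2 /\ 0 < area D.
Proof.
  intros HR HD Ho Hne. destruct (sgvol_nrm2_le_area R0 D HR HD) as [HF HM].
  pose proof (sgvol_nrm2_pos D Hne Ho HF). split; auto. change (area D) with (vol2 D).
  assert (0 < 2 * R0 * R0 + 1) by nra.
  destruct (Rle_dec (vol2 D) 0); [|lra]. assert ((2 * R0 * R0 + 1) * vol2 D <= 0) by nra. lra.
Qed.

Lemma in_square_radius_ge0 R0 D : in_square R0 D -> (exists p, D p) -> 0 <= R0.
Proof. intros HD [p Dp]. destruct (HD p Dp) as [H _]. pose proof (Rabs_pos (fst p)). lra. Qed.

(** * Symmetrisation and rotational averaging *)

Lemma two_PI_div_bounds N : (3 <= N)%nat -> 0 < 2 * PI / INR N < PI.
Proof.
  intros HN. assert (HN0 : 3 <= INR N) by (replace 3 with (INR 3) by (simpl; ring); apply le_INR; auto).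
  pose proof PI_RGT_0. split; [apply Rdiv_lt_0_compat; lra|].
  apply Rmult_lt_reg_r with (INR N); [lra|]. unfold Rdiv. rewrite Rmult_assoc, Rinv_l by lra. nra.
Qed.

Lemma sumN_cos_sin_double_angles N : (3 <= N)%nat ->
  sumN (fun k => cos (2 * (INR k * (2 * PI / INR N)))) N = 0 /\
  sumN (fun k => sin (2 * (INR k * (2 * PI / INR N)))) N = 0.
Proof.
  intros HN. set (th := 2 * PI / INR N).
  assert (HN0 : 0 < INR N) by (apply lt_0_INR; lia).
  destruct (two_PI_div_bounds N HN) as [Hth0 Hthp]. fold th in Hth0, Hthp.
  assert (Hs : 0 < sin th) by (apply sin_gt_0; auto).
  assert (Hend : 2 * (INR N * th) - th = - th + 2 * INR 2 * PI).
  { unfold th. replace (INR 2) with 2 by (simpl; ring). field. lra. }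
  split.
  - assert (Ht := sumN_telescope (fun k => sin (2 * (INR k * th) - th)) N).
    rewrite (sumN_ext _ (fun k => 2 * sin th * cos (2 * (INR k * th)))) in Ht.
    2:{ intros k _. cbv beta. rewrite S_INR.
        replace (2 * ((INR k + 1) * th) - th) with (2 * (INR k * th) + th) by ring.
        rewrite sin_plus, sin_minus. ring. }
    rewrite sumN_scal in Ht. change (INR 0) with 0 in Ht. rewrite Hend, sin_period in Ht.
    replace (2 * (0 * th) - th) with (- th) in Ht by ring.
    assert (2 * sin th <> 0) by lra.
    apply Rmult_eq_reg_l with (2 * sin th); auto. rewrite Ht. ring.
  - assert (Ht := sumN_telescope (fun k => cos (2 * (INR k * th) - th)) N).
    rewrite (sumN_ext _ (fun k => - (2 * sin th) * sin (2 * (INR k * th)))) in Ht.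
    2:{ intros k _. cbv beta. rewrite S_INR.
        replace (2 * ((INR k + 1) * th) - th) with (2 * (INR k * th) + th) by ring.
        rewrite cos_plus, cos_minus. ring. }
    rewrite sumN_scal in Ht. change (INR 0) with 0 in Ht. rewrite Hend, cos_period in Ht.
    replace (2 * (0 * th) - th) with (- th) in Ht by ring.
    assert (- (2 * sin th) <> 0) by lra.
    apply Rmult_eq_reg_l with (- (2 * sin th)); auto. rewrite Ht. ring.
Qed.

Definition quad_form (al be ga : R) (p : pt2) : R := al * (fst p * fst p) + 2 * be * (fst p * snd p) + ga * (snd p * snd p).

Lemma quad_form_rot al be ga phi x :
  quad_form al be ga (rot phi x) = (al + ga) / 2 * nrm2 x +
    cos (2 * phi) * ((al - ga) / 2 * (fst x * fst x - snd x * snd x) + 2 * be * (fst x * snd x)) +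
    sin (2 * phi) * (be * (fst x * fst x - snd x * snd x) + (ga - al) * (fst x * snd x)).
Proof.
  unfold quad_form, rot, nrm2; simpl. rewrite cos_2a, sin_2a.
  pose proof (sin2_cos2 phi) as Hsc. unfold Rsqr in Hsc.
  replace ((al + ga) / 2 * (fst x * (fst x * 1) + snd x * (snd x * 1))) with
    ((al + ga) / 2 * (fst x * fst x + snd x * snd x) * (sin phi * sin phi + cos phi * cos phi)) by (rewrite Hsc; ring).
  field.
Qed.

Lemma sumN_quad_form_rot al be ga N x : (3 <= N)%nat ->
  sumN (fun k => quad_form al be ga (rot (INR k * (2 * PI / INR N)) x)) N = INR N * ((al + ga) / 2) * nrm2 x.
Proof.
  intros HN. destruct (sumN_cos_sin_double_angles N HN) as [Hc Hs].
  set (u := (al - ga) / 2 * (fst x * fst x - snd x * snd x) + 2 * be * (fst x * snd x)).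
  set (v := be * (fst x * fst x - snd x * snd x) + (ga - al) * (fst x * snd x)).
  rewrite (sumN_ext _ (fun k => (al + ga) / 2 * nrm2 x +
    (u * cos (2 * (INR k * (2 * PI / INR N))) + v * sin (2 * (INR k * (2 * PI / INR N)))))).
  2:{ intros k _. rewrite quad_form_rot. unfold u, v. ring. }
  rewrite !sumN_plus, !sumN_scal, Hc, Hs, sumN_const. ring.
Qed.

Lemma lip_bnd_quad_form R0 al be ga : 0 <= R0 -> exists K U, lip_bnd R0 K U (quad_form al be ga).
Proof.
  intros HR. pose proof (lip_bnd_fst R0 HR) as F. pose proof (lip_bnd_snd R0 HR) as S.
  pose proof (lip_bnd_mul _ _ _ _ _ _ _ F F) as FF. pose proof (lip_bnd_mul _ _ _ _ _ _ _ F S) as FS.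
  pose proof (lip_bnd_mul _ _ _ _ _ _ _ S S) as SS.
  pose proof (lip_bnd_scal _ _ _ _ al FF) as A1. pose proof (lip_bnd_scal _ _ _ _ (2 * be) FS) as A2.
  pose proof (lip_bnd_scal _ _ _ _ ga SS) as A3.
  pose proof (lip_bnd_add _ _ _ _ _ _ _ A1 A2) as A12. pose proof (lip_bnd_add _ _ _ _ _ _ _ A12 A3) as A.
  eexists; eexists. unfold quad_form. exact A.
Qed.

Lemma sgvol_symmetrize R0 K U D f : 0 <= R0 -> in_square R0 D -> lip_bnd R0 K U f -> (forall x, 0 <= f x) ->
  (forall p, D p <-> D (- fst p, - snd p)) ->
  sgvol D (fun x => f x + f (- fst x, - snd x)) = 2 * sgvol D f.
Proof.
  intros HR HD Hf Hf0 Hsym.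
  assert (Hneg : lip_bnd R0 K U (fun x => f (- fst x, - snd x))) by (apply lip_bnd_neg; auto).
  assert (Hinv : sgvol D (fun x => f (- fst x, - snd x)) = sgvol D f).
  { apply (sgvol_comp_invariant D f (fun x => (- fst x, - snd x)) (fun x => (- fst x, - snd x))).
    - exact Hsym.
    - intros [y1 y2]; simpl; f_equal; ring.
    - exact vol3_neg.
    - apply (coverable3_subgraph_lip_bnd R0 K U); auto. }
  destruct Hf as [HK [_ [Lf _]]]. destruct Hneg as [_ [_ [Lneg _]]].
  rewrite (sgvol_add R0 K); auto. rewrite Hinv. ring.
Qed.

Lemma rot_invariant_iter D th : (forall p, D p <-> D (rot th p)) -> forall k p, D p <-> D (rot (INR k * th) p).
Proof.
  intros H k. induction k; intros p.
  - simpl. rewrite Rmult_0_l, rot_0. tauto.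
  - rewrite S_INR. replace ((INR k + 1) * th) with (th + INR k * th) by ring. rewrite <- rot_rot.
    rewrite (IHk p). apply H.
Qed.

Lemma rot_invariant_even_symmetric D N : Nat.Even N -> (0 < N)%nat ->
  (forall p, D p <-> D (rot (2 * PI / INR N) p)) -> forall p, D p <-> D (- fst p, - snd p).
Proof.
  intros [m Hm] HN Hrot p. rewrite (rot_invariant_iter D _ Hrot m p).
  replace (INR m * (2 * PI / INR N)) with PI; [rewrite rot_PI; tauto|].
  rewrite Hm, mult_INR. replace (INR 2) with 2 by (simpl; ring).
  assert (0 < INR m) by (apply lt_0_INR; lia). field. lra.
Qed.

(* Averaging [quad_form] over the [N] rotations kills its trace-free part. *)
Lemma sgvol_quad_form_rot_average R0 D N al be ga : 0 <= R0 -> in_square R0 D -> (3 <= N)%nat ->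
  (forall p, D p <-> D (rot (2 * PI / INR N) p)) -> (forall y, 0 <= quad_form al be ga y) -> 0 < al + ga ->
  sgvol D (quad_form al be ga) = (al + ga) / 2 * sgvol D nrm2.
Proof.
  intros HR HD HN Hrot HQ0 Htr. set (th := 2 * PI / INR N).
  assert (Hsin : sin th <> 0).
  { destruct (two_PI_div_bounds N HN) as [H1 H2]. pose proof (sin_gt_0 th H1 H2). lra. }
  destruct (lip_bnd_quad_form (2 * R0) al be ga ltac:(lra)) as [KQ [UQ LQ]].
  set (F := fun k x => quad_form al be ga (rot (INR k * th) x)).
  assert (LF : forall k, lip_bnd R0 (2 * KQ) UQ (F k)) by (intros k; unfold F; apply lip_bnd_rot; auto).
  assert (HFk : forall k, sgvol D (F k) = sgvol D (quad_form al be ga)).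
  { induction k as [|k IH].
    - apply sgvol_ext. intros x _. unfold F. simpl INR. rewrite Rmult_0_l, rot_0. auto.
    - rewrite <- IH, (sgvol_ext D (F (S k)) (fun x => F k (rot th x))).
      + apply (sgvol_comp_invariant D (F k) (rot th) (rot (- th))); auto.
        * intros y. rewrite rot_rot. replace (th + - th) with 0 by ring. apply rot_0.
        * intros Y HY. apply vol3_rot; auto.
        * rewrite <- (pred_ext (subgraph D (F (S k)))).
          { apply (coverable3_subgraph_lip_bnd R0 (2 * KQ) UQ); auto. }
          intros [x t]. unfold subgraph, F; cbn [fst snd]. rewrite rot_rot, S_INR.
          replace (INR k * th + th) with ((INR k + 1) * th) by ring. tauto.
      + intros x _. unfold F. rewrite rot_rot, S_INR. f_equal. f_equal. ring. }
  assert (HN0 : 0 < INR N) by (apply lt_0_INR; lia).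
  destruct LQ as [HKQ [HUQ _]].
  apply Rmult_eq_reg_l with (INR N); [rewrite <- Rmult_assoc|lra].
  destruct (sgvol_nrm2_le_area R0 D HR HD) as [Hnrm2 _].
  rewrite <- (sgvol_scale D nrm2 (INR N * ((al + ga) / 2))) by (auto; apply Rmult_lt_0_compat; lra).
  rewrite (sgvol_ext D (fun x => INR N * ((al + ga) / 2) * nrm2 x) (fun x => sumN (fun k => F k x) N)).
  2:{ intros x _. unfold F. symmetry. apply sumN_quad_form_rot. lia. }
  rewrite (sgvol_sumN R0 (2 * KQ) UQ D F N); auto; try lra.
  - rewrite (sumN_ext _ (fun _ => sgvol D (quad_form al be ga))) by (intros; apply HFk).
    symmetry. apply sumN_const.
  - intros k x _. apply HQ0.
Qed.

(** * The piecewise linear map *)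

Lemma pw_matrices_triangular (Tp Tm : mat2) :
  mdet Tp <> 0 ->
  (forall x, mapply Tp (x, 0) = mapply Tm (x, 0)) ->
  (forall q, 0 < snd q <-> exists p, 0 < snd p /\ mapply Tp p = q) ->
  (forall q, snd q < 0 <-> exists p, snd p < 0 /\ mapply Tm p = q) ->
  mdet Tp = mdet Tm ->
  exists a b1 b2 d, Tp = (a, b1, 0, d) /\ Tm = (a, b2, 0, d) /\ a <> 0 /\ 0 < d.
Proof.
  destruct Tp as [[[a b1] c1] d1]. destruct Tm as [[[a2 b2] c2] d2].
  intros Hdp Hax HTp HTm Hdet. unfold mdet, mapply in *; simpl in *.
  (* The images of the lines [x2 = 1] and [x2 = -1] avoid the [x1]-axis only if [c1 = c2 = 0]. *)
  assert (Hp : forall x, 0 < c1 * x + d1 * 1).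
  { intros x. apply (proj2 (HTp (a * x + b1 * 1, c1 * x + d1 * 1))). exists (x, 1). simpl. split; [lra|auto]. }
  assert (Hm : forall x, c2 * x + d2 * (-1) < 0).
  { intros x. apply (proj2 (HTm (a2 * x + b2 * (-1), c2 * x + d2 * (-1)))). exists (x, -1). simpl. split; [lra|auto]. }
  assert (Hd1 : 0 < d1) by (specialize (Hp 0); lra).
  assert (Hd2 : 0 < d2) by (specialize (Hm 0); lra).
  assert (Hc1 : c1 = 0).
  { destruct (Req_dec c1 0) as [|Hc]; auto. specialize (Hp (- (d1 + 1) / c1)).
    replace (c1 * (- (d1 + 1) / c1) + d1 * 1) with (-1) in Hp by (field; auto). lra. }
  assert (Hc2 : c2 = 0).
  { destruct (Req_dec c2 0) as [|Hc]; auto. specialize (Hm ((d2 + 1) / c2)).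
    replace (c2 * ((d2 + 1) / c2) + d2 * (-1)) with 1 in Hm by (field; auto). lra. }
  subst c1 c2.
  specialize (Hax 1). inversion Hax as [[Ha Hc]]. assert (a = a2) by lra. subst a2.
  assert (Ha0 : a <> 0) by (intros ->; apply Hdp; ring).
  assert (d1 = d2). { apply Rmult_eq_reg_l with a; auto. lra. }
  subst d2. exists a, b1, b2, d1. repeat split; auto.
Qed.

Definition pw_shear (b1 b2 s : R) : R := if Rle_dec 0 s then b1 * s else b2 * s.

Lemma lipschitz1_pw_shear b1 b2 : lipschitz1 (Rabs b1 + Rabs b2) (pw_shear b1 b2).
Proof.
  intros x y. unfold pw_shear. pose proof (Rabs_pos b1). pose proof (Rabs_pos b2). pose proof (Rabs_pos (x - y)).
  destruct (Rle_dec 0 x), (Rle_dec 0 y).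
  - rewrite <- Rmult_minus_distr_l, Rabs_mult. nra.
  - eapply Rle_trans; [apply Rabs_triang|]. rewrite Rabs_Ropp, !Rabs_mult.
    assert (Rabs x <= Rabs (x - y)) by (rewrite !Rabs_right by lra; lra).
    assert (Rabs y <= Rabs (x - y)) by (rewrite Rabs_left by lra; rewrite Rabs_right by lra; lra).
    nra.
  - eapply Rle_trans; [apply Rabs_triang|]. rewrite Rabs_Ropp, !Rabs_mult.
    assert (Rabs x <= Rabs (x - y)) by (rewrite Rabs_left by lra; rewrite Rabs_left by lra; lra).
    assert (Rabs y <= Rabs (x - y)) by (rewrite Rabs_right by lra; rewrite Rabs_left by lra; lra).
    nra.
  - rewrite <- Rmult_minus_distr_l, Rabs_mult. nra.
Qed.

Lemma lipschitz1_div K g c : 0 <= K -> c <> 0 -> lipschitz1 K g -> lipschitz1 (K / Rabs c) (fun s => g s / c).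
Proof.
  intros HK Hc Hg x y. replace (g x / c - g y / c) with ((g x - g y) * / c) by (field; auto).
  rewrite Rabs_mult, Rabs_inv. specialize (Hg x y).
  assert (0 < / Rabs c) by (apply Rinv_0_lt_compat, Rabs_pos_lt; auto).
  unfold Rdiv. nra.
Qed.

Section PiecewiseMap.
Variables a b1 b2 d : R.
Hypothesis Ha : a <> 0.
Hypothesis Hd : 0 < d.

Let T := pw_map (a, b1, 0, d) (a, b2, 0, d).
Let g s := pw_shear b1 b2 s / a.

Lemma pw_map_triangular p : T p = (a * fst p + pw_shear b1 b2 (snd p), d * snd p).
Proof. unfold T, pw_map, pw_shear, mapply. destruct (Rle_dec 0 (snd p)); f_equal; ring. Qed.

Lemma pw_map_scale_hshear p : T p = scale2 a d (hshear g p).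
Proof. rewrite pw_map_triangular. unfold scale2, hshear, g; simpl. f_equal. field; auto. Qed.

Let lipschitz1_g : lipschitz1 ((Rabs b1 + Rabs b2) / Rabs a) g.
Proof.
  apply lipschitz1_div; auto using lipschitz1_pw_shear.
  pose proof (Rabs_pos b1); pose proof (Rabs_pos b2); lra.
Qed.

Let lipschitz_const_g_ge0 : 0 <= (Rabs b1 + Rabs b2) / Rabs a.
Proof.
  apply Rmult_le_pos; [pose proof (Rabs_pos b1); pose proof (Rabs_pos b2); lra|].
  left; apply Rinv_0_lt_compat, Rabs_pos_lt; auto.
Qed.

Lemma area_pw_image R0 D : in_square R0 D -> area (image T D) = Rabs a * Rabs d * area D.
Proof.
  intros HD. change (area (image T D)) with (vol2 (img T D)). change (area D) with (vol2 D).
  rewrite (img_ext _ (fun p => scale2 a d (hshear g p))) by (intros; apply pw_map_scale_hshear).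
  rewrite <- img_comp.
  destruct (vol2_hshear g _ D lipschitz_const_g_ge0 lipschitz1_g (coverable2_in_square R0 D HD)) as [F1 E1].
  destruct (vol2_scale2 a d _ Ha ltac:(lra) F1) as [_ E2]. rewrite E2, E1. ring.
Qed.

Definition pw_nrm2 (p : pt2) : R := nrm2 (T p).

Lemma lip_bnd_pw_nrm2 R0 : 0 <= R0 -> exists K U, lip_bnd R0 K U pw_nrm2.
Proof.
  intros HR.
  assert (Hb : lip_bnd R0 (Rabs b1 + Rabs b2) ((Rabs b1 + Rabs b2) * R0) (fun p => pw_shear b1 b2 (snd p))).
  { apply lip_bnd_of_lipschitz1; auto using lipschitz1_pw_shear.
    - pose proof (Rabs_pos b1); pose proof (Rabs_pos b2); lra.
    - unfold pw_shear. destruct (Rle_dec 0 0); ring. }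
  pose proof (lip_bnd_add _ _ _ _ _ _ _ (lip_bnd_scal _ _ _ _ a (lip_bnd_fst R0 HR)) Hb) as Hu.
  pose proof (lip_bnd_scal _ _ _ _ d (lip_bnd_snd R0 HR)) as Hv.
  pose proof (lip_bnd_add _ _ _ _ _ _ _ (lip_bnd_mul _ _ _ _ _ _ _ Hu Hu) (lip_bnd_mul _ _ _ _ _ _ _ Hv Hv)) as H.
  eexists; eexists. replace pw_nrm2 with (fun p : pt2 =>
    (a * fst p + pw_shear b1 b2 (snd p)) * (a * fst p + pw_shear b1 b2 (snd p)) + d * snd p * (d * snd p)).
  { exact H. }
  apply functional_extensionality. intros p. unfold pw_nrm2, nrm2. rewrite pw_map_triangular. simpl. ring.
Qed.

Lemma moment_pw_image R0 D : 0 <= R0 -> in_square R0 D ->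
  moment0 (image T D) = Rabs a * Rabs d * sgvol D pw_nrm2.
Proof.
  intros HR HD. destruct (lip_bnd_pw_nrm2 R0 HR) as [K [U Hlip]].
  assert (HF : coverable3 (subgraph D pw_nrm2)) by (apply (coverable3_subgraph_lip_bnd R0 K U); auto).
  rewrite moment0_sgvol. unfold sgvol.
  assert (E : subgraph (image T D) nrm2 = img (scale3 a d 1) (img (shear1 g) (subgraph D pw_nrm2))).
  { rewrite img_comp. apply pred_ext. intros [[y1 y2] t]. unfold subgraph, img, image; simpl. split.
    - intros [[x [Dx Ex]] Ht]. exists (x, t). simpl. split; [split; [auto|]|].
      + unfold pw_nrm2. rewrite Ex. auto.
      + rewrite <- Ex, pw_map_scale_hshear. destruct x.
        unfold scale3, shear1, scale2, hshear; simpl. f_equal. ring.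
    - intros [[x t'] [[Dx Ht] Eq]]. simpl in *.
      assert (Ex : T x = (y1, y2) /\ t' = t).
      { rewrite pw_map_scale_hshear. destruct x. unfold scale3, shear1, scale2, hshear in *; simpl in *.
        inversion Eq. split; [reflexivity|ring]. }
      destruct Ex as [Ex ->]. split; [exists x; auto|]. unfold pw_nrm2 in Ht. rewrite Ex in Ht. exact Ht. }
  rewrite E. destruct (vol3_shear1 g _ _ lipschitz_const_g_ge0 lipschitz1_g HF) as [F1 M1].
  destruct (vol3_scale3 a d 1 _ Ha ltac:(lra) ltac:(lra) F1) as [_ M2]. unfold vol3 in *. rewrite M2, M1.
  rewrite Rabs_R1. ring.
Qed.

(* The two halves of [T] pair up under [x |-> -x]: their squared norms add up to a
   quadratic form whose trace is [2 a^2 + b1^2 + b2^2 + 2 d^2]. *)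
Lemma pw_nrm2_symmetrize x : pw_nrm2 x + pw_nrm2 (- fst x, - snd x) =
  quad_form (2 * (a * a)) (a * (b1 + b2)) (b1 * b1 + b2 * b2 + 2 * (d * d)) x.
Proof.
  destruct x as [x1 x2]. unfold pw_nrm2, nrm2, quad_form. rewrite !pw_map_triangular.
  unfold pw_shear; simpl. destruct (Rle_dec 0 x2), (Rle_dec 0 (- x2)).
  - assert (x2 = 0) by lra. subst x2. ring.
  - ring.
  - ring.
  - lra.
Qed.

Lemma sgvol_pw_nrm2_average R0 D N : 0 <= R0 -> in_square R0 D -> (3 <= N)%nat ->
  (forall p, D p <-> D (rot (2 * PI / INR N) p)) -> (forall p, D p <-> D (- fst p, - snd p)) ->
  sgvol D pw_nrm2 = (2 * (a * a) + (b1 * b1 + b2 * b2 + 2 * (d * d))) / 4 * sgvol D nrm2.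
Proof.
  intros HR HD HN Hrot Hsym. destruct (lip_bnd_pw_nrm2 R0 HR) as [K [U Hlip]].
  assert (Hq : forall y, 0 <= quad_form (2 * (a * a)) (a * (b1 + b2)) (b1 * b1 + b2 * b2 + 2 * (d * d)) y).
  { intros y. rewrite <- pw_nrm2_symmetrize. pose proof (nrm2_ge0 (T y)).
    pose proof (nrm2_ge0 (T (- fst y, - snd y))). unfold pw_nrm2. lra. }
  assert (Htr : 0 < 2 * (a * a) + (b1 * b1 + b2 * b2 + 2 * (d * d))) by nra.
  apply Rmult_eq_reg_l with 2; [|lra].
  rewrite <- (sgvol_symmetrize R0 K U D) by (auto; intros; apply nrm2_ge0).
  rewrite (sgvol_ext D _ _ (fun x _ => pw_nrm2_symmetrize x)).
  rewrite (sgvol_quad_form_rot_average R0 D N) by auto. field.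
Qed.

End PiecewiseMap.

Lemma hs2_minv_triangular_ratio a b1 b2 d M A : a <> 0 -> 0 < d -> 0 < M -> 0 < A ->
  / 4 * (hs2 (minv (a, b1, 0, d)) + hs2 (minv (a, b2, 0, d))) =
  (Rabs a * Rabs d * ((2 * (a * a) + (b1 * b1 + b2 * b2 + 2 * (d * d))) / 4 * M) / (Rabs a * Rabs d * A) ^ 3)
    / (M / A ^ 3).
Proof.
  intros Ha Hd HM HA. unfold hs2, minv, mdet; simpl. rewrite (Rabs_right d) by lra.
  destruct (Rle_dec 0 a).
  - rewrite (Rabs_right a) by lra. field. repeat split; lra.
  - rewrite (Rabs_left a) by lra. field. repeat split; lra.
Qed.

Theorem mainTheorem12 (D : region) (N : nat) (Tp Tm : mat2) :
  is_domain D -> is_bounded2 D ->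
  Nat.Even N -> (4 <= N)%nat ->
  (forall p, D p <-> D (rot (2 * PI / INR N) p)) ->
  mdet Tp <> 0 -> mdet Tm <> 0 ->
  (forall x, mapply Tp (x, 0) = mapply Tm (x, 0)) ->
  (forall q, 0 < snd q <-> exists p, 0 < snd p /\ mapply Tp p = q) ->
  (forall q, snd q < 0 <-> exists p, snd p < 0 /\ mapply Tm p = q) ->
  mdet Tp = mdet Tm ->
  / 4 * (hs2 (minv Tp) + hs2 (minv Tm)) =
    (moment0 (image (pw_map Tp Tm) D) / area (image (pw_map Tp Tm) D) ^ 3)
    / (moment0 D / area D ^ 3).
Proof.
  intros [Hne [Hopen _]] [R0 HD] Heven HN Hrot Hdp _ Hax HTp HTm Hdet.
  destruct (pw_matrices_triangular Tp Tm Hdp Hax HTp HTm Hdet) as [a [b1 [b2 [d [-> [-> [Ha Hd]]]]]]].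
  assert (HR := in_square_radius_ge0 R0 D HD Hne).
  assert (Hsym := rot_invariant_even_symmetric D N Heven ltac:(lia) Hrot).
  destruct (moment_area_pos R0 D HR HD Hopen Hne) as [HM HA].
  rewrite (area_pw_image a b1 b2 d Ha Hd R0 D HD), (moment_pw_image a b1 b2 d Ha Hd R0 D HR HD),
    (sgvol_pw_nrm2_average a b1 b2 d Hd R0 D N HR HD ltac:(lia) Hrot Hsym), moment0_sgvol.
  apply hs2_minv_triangular_ratio; auto.
Qed.
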